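(* Let $m>0$. There is a unique $R^*>m/2$ satisfying $$\log\sqrt{\frac{2R^*}{m}}=\frac{2R^*+m}{2R^*-m},$$ and the annular domain $\Sigma_0(R)=\Sigma_0\cap\{|x|\le R\}$ of the plane through the origin is stable (i.e. $Q(u,u)\ge 0$ for every smooth $u$ on $\Sigma_0(R)$ vanishing on $\{|x|=R\}$) if and only if $m/2<R\le R^*$; that is, $\Sigma_0(R^* )$ is the maximal annular domain of stability containing the horizon. (Numerically $R^*\approx 5.5\,m$.)
   Context: For $m>0$ let $M=\{x\in\mathbb R^3: |x|\ge m/2\}$ with metric $g=(1+\frac{m}{2|x|})^4\delta$, $\delta$ the Euclidean metric, and $\Sigma_0=\{x\in M:x_3=0\}$; $|x|$ denotes the Euclidean norm. For smooth $u$ on $\Sigma_0(R)$, since $\Sigma_0$ and $\partial M$ are totally geodesic, the second variation of $g$-area for variations tangential along $\partial M$ is $Q(u,u)=\int_{\Sigma_0(R)}\big(|\nabla_g u|_g^2-\mathrm{Ric}_g(N,N)u^2\big)dA_g$, with $N$ a unit normal to $\Sigma_0$. *)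

From Stdlib Require Import Reals Lra ClassicalEpsilon.
Open Scope R_scope.

(** Points of R^3 are functions nat -> R; only coordinates 0,1,2 are used
    (coordinate 2 is x_3). *)
Definition pt := nat -> R.

Definition shift (x : pt) (i : nat) (t : R) : pt :=
  fun k => if Nat.eqb k i then x k + t else x k.

(** Partial derivative d/dx_i of f at x (value of the derivative when it
    exists; an arbitrary value otherwise -- only used where it exists). *)
Definition pd (i : nat) (f : pt -> R) (x : pt) : R :=
  epsilon (inhabits 0)
    (fun l => derivable_pt_lim (fun t => f (shift x i t)) 0 l).

Definition sum3 (f : nat -> R) : R := f 0%nat + f 1%nat + f 2%nat.

Definition norm3 (x : pt) : R := sqrt (x 0%nat ^ 2 + x 1%nat ^ 2 + x 2%nat ^ 2).

Definition phi (m : R) (x : pt) : R := 1 + m / (2 * norm3 x).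

Definition gmet (m : R) (i j : nat) (x : pt) : R :=
  if Nat.eqb i j then phi m x ^ 4 else 0.

Definition cof3 (A : nat -> nat -> R) (i j : nat) : R :=
  let i1 := Nat.modulo (i + 1) 3 in let i2 := Nat.modulo (i + 2) 3 in
  let j1 := Nat.modulo (j + 1) 3 in let j2 := Nat.modulo (j + 2) 3 in
  A i1 j1 * A i2 j2 - A i1 j2 * A i2 j1.
Definition det3 (A : nat -> nat -> R) : R := sum3 (fun j => A 0%nat j * cof3 A 0%nat j).
Definition inv3 (A : nat -> nat -> R) (i j : nat) : R := cof3 A j i / det3 A.

Definition ginv (m : R) (i j : nat) (x : pt) : R := inv3 (fun a b => gmet m a b x) i j.

Definition Gamma (m : R) (i j k : nat) (x : pt) : R :=
  / 2 * sum3 (fun l => ginv m i l x *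
     (pd j (gmet m l k) x + pd k (gmet m l j) x - pd l (gmet m j k) x)).

Definition Ric (m : R) (j k : nat) (x : pt) : R :=
  sum3 (fun i => pd i (Gamma m i j k) x - pd k (Gamma m i i j) x
     + sum3 (fun p => Gamma m i i p x * Gamma m p j k x
                      - Gamma m i k p x * Gamma m p i j x)).

(** g-unit normal N to the plane {x_3 = 0}: N^j = g^{j3} / sqrt(g^{33}). *)
Definition Nvec (m : R) (x : pt) (j : nat) : R := ginv m j 2%nat x / sqrt (ginv m 2%nat 2%nat x).

Definition RicNN (m : R) (x : pt) : R :=
  sum3 (fun j => sum3 (fun k => Ric m j k x * Nvec m x j * Nvec m x k)).

Definition emb (x y : R) : pt :=
  fun k => match k with 0%nat => x | 1%nat => y | _ => 0 end.

Definition hmet (m : R) (a b : nat) (x y : R) : R := gmet m a b (emb x y).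
Definition det2 (A : nat -> nat -> R) : R := A 0%nat 0%nat * A 1%nat 1%nat - A 0%nat 1%nat * A 1%nat 0%nat.
Definition inv2 (A : nat -> nat -> R) (a b : nat) : R :=
  (match a, b with
   | 0%nat, 0%nat => A 1%nat 1%nat
   | 1%nat, 1%nat => A 0%nat 0%nat
   | 0%nat, 1%nat => - A 0%nat 1%nat
   | _, _ => - A 1%nat 0%nat end) / det2 A.
Definition sum2 (f : nat -> R) : R := f 0%nat + f 1%nat.

Definition pdu (a : nat) (u : R -> R -> R) (x y : R) : R :=
  pd a (fun p => u (p 0%nat) (p 1%nat)) (emb x y).

Definition gradnorm2 (m : R) (u : R -> R -> R) (x y : R) : R :=
  sum2 (fun a => sum2 (fun b =>
    inv2 (fun c d => hmet m c d x y) a b * pdu a u x y * pdu b u x y)).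
Definition areadens (m : R) (x y : R) : R := sqrt (det2 (fun c d => hmet m c d x y)).

(** Riemann integral on [a,b] (value when f is Riemann integrable). *)
Definition Rint (a b : R) (f : R -> R) : R :=
  epsilon (inhabits 0) (fun l => exists pr : Riemann_integrable f a b, RiemannInt pr = l).

(** Integral over the annulus Sigma_0(R) = {m/2 <= |x| <= R, x_3 = 0} w.r.t.
    Lebesgue measure dx1 dx2, computed in polar coordinates. *)
Definition annulus_int (m Rad : R) (F : R -> R -> R) : R :=
  Rint (m / 2) Rad (fun r => Rint 0 (2 * PI) (fun t => F (r * cos t) (r * sin t)) * r).

Definition Qform (m Rad : R) (u : R -> R -> R) : R :=
  annulus_int m Rad (fun x y =>
    (gradnorm2 m u x y - RicNN m (emb x y) * u x y ^ 2) * areadens m x y).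

Definition cont2 (f : R -> R -> R) : Prop :=
  forall x y eps, 0 < eps -> exists d, 0 < d /\
    forall x' y', (x' - x) ^ 2 + (y' - y) ^ 2 < d ^ 2 -> Rabs (f x' y' - f x y) < eps.

Fixpoint Cn (n : nat) (f : R -> R -> R) : Prop :=
  match n with
  | O => cont2 f
  | S k => cont2 f /\ exists fx fy : R -> R -> R,
      (forall x y, derivable_pt_lim (fun t => f t y) x (fx x y)) /\
      (forall x y, derivable_pt_lim (fun t => f x t) y (fy x y)) /\
      Cn k fx /\ Cn k fy
  end.

Definition smooth2 (f : R -> R -> R) : Prop := forall n, Cn n f.

Definition stable (m Rad : R) : Prop :=
  forall u : R -> R -> R, smooth2 u ->
    (forall x y, x ^ 2 + y ^ 2 = Rad ^ 2 -> u x y = 0) ->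
    0 <= Qform m Rad u.

Definition Rstar_eq (m Rs : R) : Prop :=
  ln (sqrt (2 * Rs / m)) = (2 * Rs + m) / (2 * Rs - m).

From Stdlib Require Import Reals Lra Lia ClassicalEpsilon FunctionalExtensionality.
From Coquelicot Require Import Coquelicot.
Open Scope R_scope.

(** For the metric [g = phi^4 delta], [phi = 1 + m / (2|x|)], the plane
    [Sigma_0 = {x_3 = 0}] is totally geodesic and the second variation is
    [Q(u,u) = int (|grad u|^2 - Ric(N,N) u^2) dA].

    1. Curvature: from explicit Christoffel symbols, [Ric(N,N)] on [Sigma_0] is
       [phi^-4 V(|x|)] with [V r = m / (r (r + m/2)^2)]; since the Dirichlet
       energy is conformally invariant in dimension two, the integrand of [Q]
       is the Euclidean [|grad u|^2 - V u^2], and in polar coordinates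
       [Q(u,u) = int_{m/2}^R h(r) dr].
    2. The radial Jacobi field [w(s)], [s = 2r/m], has [w'(1) = 0] and its
       first zero [s*] is the root of [psi s = ln s - 2 - 4/(s-1)], which is
       exactly the equation defining [R* = m s*/2].
    3. Stability for [R <= R*]: [Phi = r w_r / w] solves a Riccati equation
       and Picone's inequality makes [int_{m/2}^r h - Phi(r) J(r)] nondecreasing
       ([J] the circle average of [u^2]); it vanishes on the horizon, and at
       [r = R] the boundary term vanishes ([u = 0] on [|x| = R]), up to a limit
       when [R = R*].
    4. Instability for [R > R*]: the smooth radial test function
       [u = w(2|x|/m) - w(2R/m)] gives [Q(u,u) < 0] by integrating the Jacobi
       equation by parts. *)

(** * Real-analysis toolkit *)

Lemma pd_eq i f x l :
  derivable_pt_lim (fun t => f (shift x i t)) 0 l -> pd i f x = l.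
Proof.
  intro H. unfold pd.
  pose proof (epsilon_spec (inhabits 0)
    (fun l => derivable_pt_lim (fun t => f (shift x i t)) 0 l) (ex_intro _ l H)).
  eapply uniqueness_limite; eauto.
Qed.

Lemma derivable_pt_lim_ext_loc f g x l (d : R) : 0 < d ->
  (forall t, Rabs (t - x) < d -> f t = g t) ->
  derivable_pt_lim f x l -> derivable_pt_lim g x l.
Proof.
  intros Hd Heq H eps Heps. destruct (H eps Heps) as [del Hdel].
  assert (Hm : 0 < Rmin del d) by (apply Rmin_pos; [apply cond_pos | lra]).
  exists (mkposreal _ Hm). intros h Hh Hhd. simpl in Hhd.
  rewrite <- !Heq.
  - apply Hdel; auto. eapply Rlt_le_trans; [apply Hhd | apply Rmin_l].
  - rewrite Rminus_diag, Rabs_R0; lra.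
  - replace (x + h - x) with h by ring.
    eapply Rlt_le_trans; [apply Hhd | apply Rmin_r].
Qed.

Lemma derivable_pt_lim_translate f x l :
  derivable_pt_lim f x l <-> derivable_pt_lim (fun h => f (x + h)) 0 l.
Proof.
  split; intros H eps Heps; destruct (H eps Heps) as [d Hd]; exists d;
    intros h Hh Hhd; specialize (Hd h Hh Hhd);
    rewrite ?Rplus_0_l, ?Rplus_0_r in *; exact Hd.
Qed.

Lemma mvt_between g g' p q : (forall c, derivable_pt_lim g c (g' c)) ->
  exists xi, Rabs (xi - p) <= Rabs (q - p) /\ g q - g p = g' xi * (q - p).
Proof.
  intro H. destruct (Rtotal_order p q) as [Hl | [He | Hg]].
  - destruct (MVT_cor2 g g' p q Hl (fun c _ => H c)) as [c [Hc1 Hc2]].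
    exists c. split; auto. rewrite !Rabs_right by lra. lra.
  - subst. exists q. split; [rewrite Rminus_diag, Rabs_R0; lra | ring].
  - destruct (MVT_cor2 g g' q p Hg (fun c _ => H c)) as [c [Hc1 Hc2]].
    exists c. split; [rewrite !Rabs_left by lra; lra | lra].
Qed.

Lemma continuity_pt_delta f x eps : continuity_pt f x -> 0 < eps ->
  exists d, 0 < d /\ forall y, Rabs (y - x) < d -> Rabs (f y - f x) < eps.
Proof.
  intros H He. destruct (H eps He) as [d [Hd Hdd]]. exists d. split; auto.
  intros y Hy. destruct (Req_dec y x) as [-> | Hne].
  - rewrite Rminus_diag, Rabs_R0. auto.
  - apply (Hdd y). split; [split; [constructor | auto] | auto].
Qed.

Lemma continuity_pt_of_is_derive f x l : is_derive f x l -> continuity_pt f x.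
Proof. intro H. apply derivable_continuous_pt. exists l. apply is_derive_Reals; auto. Qed.

Lemma ge0_of_ge_neg_eps (x : R) : (forall eps, 0 < eps -> - eps <= x) -> 0 <= x.
Proof.
  intro H. destruct (Rle_dec 0 x); auto.
  pose proof (H (- x / 2) ltac:(lra)). lra.
Qed.

Lemma deriv_increment_bound f a l : derivable_pt_lim f a l ->
  forall e, 0 < e -> exists d, 0 < d /\ forall h, h <> 0 -> Rabs h < d ->
    Rabs (f (a + h) - f a - l * h) <= e * Rabs h.
Proof.
  intros Df e He. destruct (Df e He) as [d K]. exists d. split; [apply cond_pos |].
  intros h Hh0 Hh. pose proof (Rabs_pos_lt h Hh0).
  replace (f (a + h) - f a - l * h) with (((f (a + h) - f a) / h - l) * h) by (field; auto).
  rewrite Rabs_mult. apply Rmult_le_compat_r; [lra |]. apply Rlt_le, K; auto.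
Qed.

Lemma derivable_pt_lim_little_o r : r 0 = 0 ->
  (forall e, 0 < e -> exists d, 0 < d /\ forall h, Rabs h < d -> Rabs (r h) <= e * Rabs h) ->
  derivable_pt_lim r 0 0.
Proof.
  intros H0 Ho eps Heps. destruct (Ho (eps / 2) ltac:(lra)) as [d [Hd K]].
  exists (mkposreal d Hd). simpl. intros h Hh0 Hh.
  rewrite Rplus_0_l, H0, Rminus_0_r, Rminus_0_r.
  pose proof (Rabs_pos_lt h Hh0). unfold Rdiv. rewrite Rabs_mult, Rabs_inv.
  apply (Rmult_lt_reg_r (Rabs h)); auto.
  rewrite Rmult_assoc, Rinv_l by lra. specialize (K h Hh). nra.
Qed.

Lemma simple_zero_lower_bound w a A : derivable_pt_lim w a A -> A <> 0 -> w a = 0 ->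
  exists d, 0 < d /\ forall h, h <> 0 -> Rabs h < d -> Rabs A / 2 * Rabs h <= Rabs (w (a + h)).
Proof.
  intros Dw HA Hw0. pose proof (Rabs_pos_lt A HA).
  destruct (deriv_increment_bound w a A Dw (Rabs A / 2) ltac:(lra)) as [d [Hd K]].
  exists d. split; auto. intros h Hh0 Hh. specialize (K h Hh0 Hh).
  rewrite Hw0, Rminus_0_r in K.
  pose proof (Rabs_triang_inv (A * h) (w (a + h))) as T.
  rewrite Rabs_minus_sym, Rabs_mult in T. lra.
Qed.

Lemma vanishing_quotient (N J w : R -> R) a A :
  continuity_pt N a -> derivable_pt_lim w a A -> A <> 0 -> w a = 0 ->
  derivable_pt_lim J a 0 -> J a = 0 ->
  forall eps, 0 < eps -> exists d, 0 < d /\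
    forall h, h <> 0 -> Rabs h < d -> Rabs (N (a + h) * J (a + h) / w (a + h)) <= eps.
Proof.
  intros CN Dw HA Hw0 DJ HJ0 eps Heps.
  set (B := Rabs (N a) + 1). pose proof (Rabs_pos (N a)).
  pose proof (Rabs_pos_lt A HA) as HAp.
  destruct (continuity_pt_delta N a 1 CN Rlt_0_1) as [d1 [Hd1 K1]].
  destruct (simple_zero_lower_bound w a A Dw HA Hw0) as [d2 [Hd2 K2]].
  set (eta := eps * Rabs A / (2 * B)).
  assert (Heta : 0 < eta)
    by (unfold eta, B; apply Rdiv_lt_0_compat; [apply Rmult_lt_0_compat |]; lra).
  destruct (deriv_increment_bound J a 0 DJ eta Heta) as [d3 [Hd3 K3]].
  exists (Rmin d1 (Rmin d2 d3)). split; [repeat apply Rmin_pos; auto |].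
  intros h Hh0 Hh.
  pose proof (Rmin_l d1 (Rmin d2 d3)). pose proof (Rmin_r d1 (Rmin d2 d3)).
  pose proof (Rmin_l d2 d3). pose proof (Rmin_r d2 d3).
  pose proof (Rabs_pos_lt h Hh0).
  assert (HN : Rabs (N (a + h)) < B).
  { pose proof (K1 (a + h) ltac:(replace (a + h - a) with h by ring; lra)).
    pose proof (Rabs_triang_inv (N (a + h)) (N a)). unfold B. lra. }
  specialize (K2 h Hh0 ltac:(lra)). specialize (K3 h Hh0 ltac:(lra)).
  rewrite HJ0, Rmult_0_l, !Rminus_0_r in K3.
  assert (HW0 : 0 < Rabs (w (a + h))) by nra.
  unfold Rdiv. rewrite !Rabs_mult, Rabs_inv.
  apply (Rmult_le_reg_r (Rabs (w (a + h)))); auto.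
  replace (Rabs (N (a + h)) * Rabs (J (a + h)) * / Rabs (w (a + h)) * Rabs (w (a + h)))
    with (Rabs (N (a + h)) * Rabs (J (a + h))) by (field; lra).
  assert (Rabs (N (a + h)) * Rabs (J (a + h)) <= B * (eta * Rabs h))
    by (apply Rmult_le_compat; try apply Rabs_pos; lra).
  assert (B * (eta * Rabs h) = eps * (Rabs A / 2 * Rabs h)) by (unfold eta, B; field; lra).
  assert (eps * (Rabs A / 2 * Rabs h) <= eps * Rabs (w (a + h)))
    by (apply Rmult_le_compat_l; lra).
  lra.
Qed.

Lemma nonneg_of_left_domination (G K : R -> R) a d0 : continuity_pt G a -> 0 < d0 ->
  (forall h, - d0 < h < 0 -> K (a + h) <= G (a + h)) ->
  (forall eps, 0 < eps -> exists d, 0 < d /\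
     forall h, h <> 0 -> Rabs h < d -> Rabs (K (a + h)) <= eps) ->
  0 <= G a.
Proof.
  intros CG Hd0 Hdom HK. apply ge0_of_ge_neg_eps. intros eps Heps.
  destruct (continuity_pt_delta G a (eps / 2) CG ltac:(lra)) as [d1 [Hd1 K1]].
  destruct (HK (eps / 2) ltac:(lra)) as [d2 [Hd2 K2]].
  set (h := - Rmin d0 (Rmin d1 d2) / 2).
  pose proof (Rmin_l d0 (Rmin d1 d2)). pose proof (Rmin_r d0 (Rmin d1 d2)).
  pose proof (Rmin_l d1 d2). pose proof (Rmin_r d1 d2).
  assert (0 < Rmin d0 (Rmin d1 d2)) by (repeat apply Rmin_pos; auto).
  assert (Habs : Rabs h = Rmin d0 (Rmin d1 d2) / 2) by (unfold h; rewrite Rabs_left; lra).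
  pose proof (K1 (a + h) ltac:(replace (a + h - a) with h by ring; lra)) as Q1.
  pose proof (K2 h ltac:(unfold h; lra) ltac:(lra)) as Q2.
  pose proof (Hdom h ltac:(unfold h; lra)).
  apply Rabs_def2 in Q1. pose proof (Rle_abs (- K (a + h))). rewrite Rabs_Ropp in *.
  lra.
Qed.

Lemma cont2_iff f : cont2 f <-> forall x y, continuity_2d_pt f x y.
Proof.
  split.
  - intros Hf x y eps. destruct (Hf x y eps (cond_pos eps)) as [d [Hd Hdd]].
    assert (Hd2 : 0 < d / 2) by lra.
    exists (mkposreal _ Hd2). simpl. intros u v Hu Hv. apply Hdd.
    apply Rabs_def2 in Hu. apply Rabs_def2 in Hv.
    assert (0 < (d/2 - (u-x)) * (d/2 + (u-x))) by (apply Rmult_lt_0_compat; lra).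
    assert (0 < (d/2 - (v-y)) * (d/2 + (v-y))) by (apply Rmult_lt_0_compat; lra).
    simpl. nra.
  - intros Hf x y eps Heps. destruct (Hf x y (mkposreal eps Heps)) as [d Hd].
    exists d. split; [apply cond_pos |]. intros x' y' H.
    pose proof (cond_pos d) as Hd0. apply Hd.
    + rewrite <- (Rabs_pos_eq d) by lra. apply Rsqr_lt_abs_0. unfold Rsqr.
      pose proof (pow2_ge_0 (y' - y)). simpl in *. lra.
    + rewrite <- (Rabs_pos_eq d) by lra. apply Rsqr_lt_abs_0. unfold Rsqr.
      pose proof (pow2_ge_0 (x' - x)). simpl in *. lra.
Qed.

Lemma continuity_2d_pt_comp2 f g1 g2 r t :
  continuity_2d_pt f (g1 r t) (g2 r t) -> continuity_2d_pt g1 r t ->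
  continuity_2d_pt g2 r t -> continuity_2d_pt (fun r t => f (g1 r t) (g2 r t)) r t.
Proof.
  intros Hf H1 H2 eps. destruct (Hf eps) as [d1 Hd1].
  destruct (H1 d1) as [a Ha]. destruct (H2 d1) as [b Hb].
  assert (Hm : 0 < Rmin a b) by (apply Rmin_pos; apply cond_pos).
  exists (mkposreal _ Hm). simpl. intros u v Hu Hv. apply Hd1.
  - apply Ha; eapply Rlt_le_trans; eauto; [apply Rmin_l | apply Rmin_l].
  - apply Hb; eapply Rlt_le_trans; eauto; [apply Rmin_r | apply Rmin_r].
Qed.

Lemma continuity_2d_pt_cos2 r t : continuity_2d_pt (fun _ t => cos t) r t.
Proof.
  apply (continuity_1d_2d_pt_comp cos (fun _ v => v)).
  - apply derivable_continuous_pt, derivable_pt_cos.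
  - apply continuity_2d_pt_id2.
Qed.

Lemma continuity_2d_pt_sin2 r t : continuity_2d_pt (fun _ t => sin t) r t.
Proof.
  apply (continuity_1d_2d_pt_comp sin (fun _ v => v)).
  - apply derivable_continuous_pt, derivable_pt_sin.
  - apply continuity_2d_pt_id2.
Qed.

Lemma continuity_2d_pt_polar f r t : continuity_2d_pt f (r * cos t) (r * sin t) ->
  continuity_2d_pt (fun r t => f (r * cos t) (r * sin t)) r t.
Proof.
  intro H. apply (continuity_2d_pt_comp2 f (fun r t => r * cos t) (fun r t => r * sin t));
    auto; apply continuity_2d_pt_mult;
    auto using continuity_2d_pt_id1, continuity_2d_pt_cos2, continuity_2d_pt_sin2.
Qed.

Lemma continuity_2d_pt_sqr f x y :
  continuity_2d_pt f x y -> continuity_2d_pt (fun x y => f x y ^ 2) x y.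
Proof.
  intro H. apply (continuity_2d_pt_ext (fun x y => f x y * f x y)); [intros; ring |].
  apply continuity_2d_pt_mult; auto.
Qed.

(** Increment in the first variable along the segment [(x, y) + h (a, b)]: by
    the mean value theorem it is [h a ux(x, y) + o(h)] when [ux] is continuous. *)
Lemma first_variable_increment u ux x y a b :
  (forall x y, derivable_pt_lim (fun t => u t y) x (ux x y)) -> continuity_2d_pt ux x y ->
  forall e, 0 < e -> exists d, 0 < d /\ forall h, Rabs h < d ->
    Rabs (u (x + h * a) (y + h * b) - u x (y + h * b) - h * a * ux x y) <= e * Rabs h.
Proof.
  intros Hx Cux e He.
  pose proof (Rabs_pos a). pose proof (Rabs_pos b).
  destruct (Cux (mkposreal (e / (Rabs a + 1)) ltac:(apply Rdiv_lt_0_compat; lra)))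
    as [del Hdel]. simpl in Hdel. pose proof (cond_pos del).
  exists (del / (Rabs a + Rabs b + 1)). split; [apply Rdiv_lt_0_compat; lra |].
  intros h Hh. pose proof (Rabs_pos h).
  assert (Hsmall : Rabs h * (Rabs a + Rabs b + 1) < del).
  { apply (Rmult_lt_compat_r (Rabs a + Rabs b + 1)) in Hh; [| lra].
    unfold Rdiv in Hh. rewrite Rmult_assoc, Rinv_l in Hh; lra. }
  destruct (mvt_between (fun t => u t (y + h * b)) (fun t => ux t (y + h * b)) x (x + h * a)
              (fun c => Hx c _)) as [xi [Hxi Hmvt]].
  replace (x + h * a - x) with (h * a) in * by ring. rewrite Rabs_mult in Hxi.
  assert (Hc : Rabs (ux xi (y + h * b) - ux x y) < e / (Rabs a + 1)).
  { apply Hdel; [nra |]. replace (y + h * b - y) with (h * b) by ring.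
    rewrite Rabs_mult. nra. }
  rewrite Hmvt.
  replace (ux xi (y + h * b) * (h * a) - h * a * ux x y)
    with (h * a * (ux xi (y + h * b) - ux x y)) by ring.
  rewrite !Rabs_mult.
  assert (Rabs a * Rabs (ux xi (y + h * b) - ux x y) <= e).
  { apply Rlt_le. apply (Rmult_lt_reg_r (/ (Rabs a + 1))); [apply Rinv_0_lt_compat; lra |].
    assert (Rabs a * / (Rabs a + 1) <= 1) by
      (apply (Rmult_le_reg_r (Rabs a + 1)); [lra |];
       rewrite Rmult_assoc, Rinv_l; lra).
    unfold Rdiv in Hc. pose proof (Rabs_pos (ux xi (y + h * b) - ux x y)). nra. }
  nra.
Qed.

Lemma directional_derivative u ux uy x y a b :
  (forall x y, derivable_pt_lim (fun t => u t y) x (ux x y)) ->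
  (forall x y, derivable_pt_lim (fun t => u x t) y (uy x y)) ->
  continuity_2d_pt ux x y ->
  derivable_pt_lim (fun h => u (x + h * a) (y + h * b)) 0 (a * ux x y + b * uy x y).
Proof.
  intros Hx Hy Cux.
  assert (Hv : derivable_pt_lim (fun h => u x (y + h * b)) 0 (uy x y * b)).
  { apply (derivable_pt_lim_comp (fun h => y + h * b) (fun t => u x t)).
    - apply is_derive_Reals. auto_derive; auto. ring.
    - rewrite Rmult_0_l, Rplus_0_r. apply Hy. }
  assert (Hr : derivable_pt_lim
                 (fun h => u (x + h * a) (y + h * b) - u x (y + h * b) - h * a * ux x y) 0 0).
  { apply derivable_pt_lim_little_o; [rewrite !Rmult_0_l, !Rplus_0_r; ring |].
    apply first_variable_increment; auto. }
  assert (Hl : derivable_pt_lim (fun h => h * a * ux x y) 0 (a * ux x y))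
    by (apply is_derive_Reals; auto_derive; auto; ring).
  pose proof (derivable_pt_lim_plus _ _ _ _ _ (derivable_pt_lim_plus _ _ _ _ _ Hr Hv) Hl) as D.
  replace (a * ux x y + b * uy x y) with (0 + uy x y * b + a * ux x y) by ring.
  apply (derivable_pt_lim_ext_loc _ _ _ _ 1 ltac:(lra)) with (2 := D).
  intros; unfold plus_fct; ring.
Qed.

Lemma Rint_eq a b f g : a <= b -> ex_RInt g a b ->
  (forall x, a <= x <= b -> f x = g x) -> Rint a b f = RInt g a b.
Proof.
  intros Hab Hg Hfg. pose proof (ex_RInt_Reals_0 _ _ _ Hg) as prg.
  assert (prf : Riemann_integrable f a b).
  { apply (Riemann_integrable_ext g); auto. intros x Hx. symmetry. apply Hfg.
    rewrite Rmin_left, Rmax_right in Hx by lra. auto. }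
  unfold Rint.
  destruct (epsilon_spec (inhabits 0)
    (fun l => exists pr : Riemann_integrable f a b, RiemannInt pr = l)
    (ex_intro _ _ (ex_intro _ prf eq_refl))) as [pr Hpr].
  rewrite <- Hpr, (RInt_Reals g a b prg). apply RiemannInt_P18; auto.
  intros x Hx. apply Hfg. lra.
Qed.

Lemma ex_RInt_cont (f : R -> R) a b :
  (forall x, Rmin a b <= x <= Rmax a b -> continuity_pt f x) -> ex_RInt f a b.
Proof.
  intro H. apply (@ex_RInt_continuous R_CompleteNormedModule).
  intros z Hz. apply continuity_pt_filterlim. auto.
Qed.

Lemma ex_RInt_snd f x c d :
  (forall t, Rmin c d <= t <= Rmax c d -> continuity_2d_pt f x t) -> ex_RInt (f x) c d.
Proof.
  intro H. apply ex_RInt_cont. intros z Hz eps Heps.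
  destruct (H z Hz (mkposreal eps Heps)) as [del Hdel].
  exists del. split; [apply cond_pos |]. intros w [_ Hw]. simpl in *. unfold R_dist in *.
  apply Hdel; auto. rewrite Rminus_diag, Rabs_R0. apply cond_pos.
Qed.

Lemma RInt_param_cont G c d r : c <= d ->
  (forall t, c <= t <= d -> continuity_2d_pt G r t) ->
  (exists del, 0 < del /\ forall v, Rabs (v - r) < del -> ex_RInt (G v) c d) ->
  continuity_pt (fun v => RInt (G v) c d) r.
Proof.
  intros Hcd HG [del0 [Hdel0 Hex]] eps Heps.
  set (e := eps / (d - c + 1)).
  assert (He : 0 < e) by (unfold e; apply Rdiv_lt_0_compat; lra).
  destruct (uniform_continuity_2d_1d' G c d r HG (mkposreal e He)) as [del Hdel].
  assert (Hm : 0 < Rmin del del0) by (apply Rmin_pos; [apply cond_pos | lra]).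
  exists (Rmin del del0). split; auto. intros v [_ Hv]. simpl in *. unfold R_dist in *.
  assert (Hv1 : Rabs (v - r) < del) by (eapply Rlt_le_trans; [apply Hv | apply Rmin_l]).
  assert (Hv2 : Rabs (v - r) < del0) by (eapply Rlt_le_trans; [apply Hv | apply Rmin_r]).
  assert (Er : ex_RInt (G r) c d) by (apply Hex; rewrite Rminus_diag, Rabs_R0; lra).
  assert (Ev : ex_RInt (G v) c d) by auto.
  rewrite <- (RInt_minus (G v) (G r)) by auto.
  eapply Rle_lt_trans.
  - apply (abs_RInt_le_const _ c d e); auto.
    + apply (ex_RInt_minus (G v) (G r)); auto.
    + intros t Ht. apply Rlt_le. apply Rabs_def2 in Hv1.
      apply (Hdel t r t v); auto; try lra. rewrite Rminus_diag, Rabs_R0. apply cond_pos.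
  - unfold e. replace ((d - c) * (eps / (d - c + 1)))
      with (eps * ((d - c) / (d - c + 1))) by (field; lra).
    assert ((d - c) / (d - c + 1) < 1).
    { apply (Rmult_lt_reg_r (d - c + 1)); [lra |].
      unfold Rdiv. rewrite Rmult_assoc, Rinv_l; lra. }
    assert (0 <= (d - c) / (d - c + 1)) by (apply Rdiv_le_0_compat; lra).
    nra.
Qed.

Lemma RInt_zero_fun (f : R -> R) a b : (forall x, f x = 0) -> RInt f a b = 0.
Proof.
  intro H. rewrite (RInt_ext f (fun _ => 0)) by auto. rewrite RInt_const.
  unfold scal; simpl; unfold mult; simpl. ring.
Qed.

Lemma RInt_scal_R f a b k : ex_RInt f a b -> RInt (fun x => k * f x) a b = k * RInt f a b.
Proof. intro H. apply (RInt_scal f a b k H). Qed.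

Lemma ex_RInt_scal_R f a b k : ex_RInt f a b -> ex_RInt (fun x => k * f x) a b.
Proof. intro H. apply (ex_RInt_scal f a b k H). Qed.

Lemma RInt_plus_R f g a b : ex_RInt f a b -> ex_RInt g a b ->
  RInt (fun x => f x + g x) a b = RInt f a b + RInt g a b.
Proof. intros. apply (RInt_plus f g a b); auto. Qed.

Lemma ex_RInt_plus_R f g a b : ex_RInt f a b -> ex_RInt g a b ->
  ex_RInt (fun x => f x + g x) a b.
Proof. intros. apply (ex_RInt_plus f g a b); auto. Qed.

(** * Curvature of the Schwarzschild metric along the horizontal plane *)

Lemma shift_eval x i t k : shift x i t k = x k + (if Nat.eqb k i then t else 0).
Proof. unfold shift. destruct (Nat.eqb k i); ring. Qed.

Lemma shift0 x i : shift x i 0 = x.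
Proof. apply functional_extensionality. intro k. rewrite shift_eval. destruct (Nat.eqb k i); ring. Qed.

Definition normsq3 (x : pt) := x 0%nat ^ 2 + x 1%nat ^ 2 + x 2%nat ^ 2.

Lemma normsq3_pos x : 0 < norm3 x -> 0 < normsq3 x.
Proof.
  unfold norm3, normsq3. intro H.
  destruct (Rlt_le_dec 0 (x 0%nat ^ 2 + x 1%nat ^ 2 + x 2%nat ^ 2)); auto.
  rewrite sqrt_neg_0 in H; lra.
Qed.

Lemma normsq3_shift x i t : (i < 3)%nat ->
  normsq3 (shift x i t) = normsq3 x + 2 * x i * t + t ^ 2.
Proof.
  intro Hi. unfold normsq3. rewrite !shift_eval.
  destruct i as [|[|[|i]]]; simpl; try lia; ring.
Qed.

Lemma norm3_shift_pos x d t : (d < 3)%nat -> 0 < norm3 x -> Rabs t < norm3 x ->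
  0 < norm3 (shift x d t).
Proof.
  intros Hd HN Ht. unfold norm3. fold (normsq3 (shift x d t)). rewrite normsq3_shift by auto.
  apply sqrt_lt_R0. pose proof (normsq3_pos x HN) as Hs.
  assert (Hn2 : norm3 x ^ 2 = normsq3 x)
    by (unfold norm3; rewrite pow2_sqrt; [reflexivity | unfold normsq3 in *; lra]).
  assert (Hxd : x d ^ 2 <= normsq3 x) by (unfold normsq3; destruct d as [|[|[|d]]]; try lia; nra).
  assert (Ht2 : t ^ 2 < normsq3 x).
  { rewrite <- Hn2, <- (pow2_abs t). pose proof (Rabs_pos t). nra. }
  destruct (Req_dec (x d + t) 0) as [H0 | H0].
  - replace t with (- x d) by lra. nra.
  - assert (0 < (x d + t) ^ 2) by (apply pow2_gt_0; auto). nra.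
Qed.

Lemma norm3_shift_deriv x i : (i < 3)%nat -> 0 < norm3 x ->
  derivable_pt_lim (fun t => norm3 (shift x i t)) 0 (x i / norm3 x).
Proof.
  intros Hi HN. pose proof (normsq3_pos x HN) as Hs.
  apply (derivable_pt_lim_ext_loc (fun t => sqrt (normsq3 x + 2 * x i * t + t ^ 2)) _ _ _ 1);
    [lra | intros t _; unfold norm3; fold (normsq3 (shift x i t));
           rewrite normsq3_shift by auto; reflexivity |].
  apply is_derive_Reals. auto_derive; [lra |].
  unfold norm3. fold (normsq3 x).
  replace (normsq3 x + 2 * x i * 0 + 0 * (0 * 1)) with (normsq3 x) by ring.
  field. apply Rgt_not_eq, sqrt_lt_R0. lra.
Qed.

Lemma radial_shift_deriv x i F F' : (i < 3)%nat -> 0 < norm3 x ->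
  derivable_pt_lim F (norm3 x) F' ->
  derivable_pt_lim (fun t => F (norm3 (shift x i t))) 0 (F' * (x i / norm3 x)).
Proof.
  intros Hi HN HF.
  apply (derivable_pt_lim_comp (fun t => norm3 (shift x i t)) F).
  - apply norm3_shift_deriv; auto.
  - rewrite shift0. auto.
Qed.

Definition kron (i j : nat) : R := if Nat.eqb i j then 1 else 0.

Lemma phi_pos m x : 0 < m -> 0 < norm3 x -> 0 < phi m x.
Proof.
  intros. unfold phi. assert (0 < m / (2 * norm3 x)) by (apply Rdiv_lt_0_compat; lra). lra.
Qed.

Definition phi4_deriv (m : R) (x : pt) (j : nat) : R :=
  4 * phi m x ^ 3 * (- m / (2 * norm3 x ^ 2)) * (x j / norm3 x).

Lemma pd_gmet m x l k j : 0 < m -> (j < 3)%nat -> 0 < norm3 x ->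
  pd j (gmet m l k) x = kron l k * phi4_deriv m x j.
Proof.
  intros Hm Hj HN. unfold kron. destruct (Nat.eqb l k) eqn:E.
  - apply pd_eq.
    apply (derivable_pt_lim_ext_loc
             (fun t => (fun r => (1 + m / (2 * r)) ^ 4) (norm3 (shift x j t))) _ _ _ 1);
      [lra | intros t _; unfold gmet; rewrite E; reflexivity |].
    unfold phi4_deriv.
    replace (1 * _) with ((4 * phi m x ^ 3 * (- m / (2 * norm3 x ^ 2))) * (x j / norm3 x)) by ring.
    apply (radial_shift_deriv x j (fun r => (1 + m / (2 * r)) ^ 4)); auto.
    apply is_derive_Reals. auto_derive; [lra |]. unfold phi. field. lra.
  - apply pd_eq. replace (0 * phi4_deriv m x j) with 0 by ring.
    apply (derivable_pt_lim_ext_loc (fun _ => 0) _ _ _ 1);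
      [lra | intros t _; unfold gmet; rewrite E; reflexivity | apply derivable_pt_lim_const].
Qed.

Lemma ginv_eq m x i l : 0 < m -> 0 < norm3 x -> (i < 3)%nat -> (l < 3)%nat ->
  ginv m i l x = kron i l / phi m x ^ 4.
Proof.
  intros Hm HN Hi Hl. pose proof (phi_pos m x Hm HN).
  unfold ginv, inv3, cof3, det3, sum3, gmet, kron.
  destruct i as [|[|[|i]]]; try lia; destruct l as [|[|[|l]]]; try lia;
    simpl; unfold cof3; simpl; field; lra.
Qed.

(** For a conformally flat metric [phi^4 delta] the Christoffel symbols are
    [kron i j a_k + kron i k a_j - kron j k a_i] with [a = grad (log phi^2)];
    here [a_l = - m x_l / (|x|^2 (|x| + m/2))]. *)
Definition log_grad (m : R) (l : nat) (x : pt) : R :=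
  - m * x l / (norm3 x ^ 2 * (norm3 x + m / 2)).

Definition christoffel (m : R) (i j k : nat) (x : pt) : R :=
  kron i j * log_grad m k x + kron i k * log_grad m j x - kron j k * log_grad m i x.

Lemma Gamma_eq m i j k x : 0 < m -> 0 < norm3 x ->
  (i < 3)%nat -> (j < 3)%nat -> (k < 3)%nat -> Gamma m i j k x = christoffel m i j k x.
Proof.
  intros Hm HN Hi Hj Hk. pose proof (phi_pos m x Hm HN).
  unfold Gamma, sum3. rewrite !ginv_eq, !pd_gmet by (auto; lia).
  unfold christoffel, log_grad, phi4_deriv, phi, kron.
  destruct i as [|[|[|i]]]; try lia; destruct j as [|[|[|j]]]; try lia;
    destruct k as [|[|[|k]]]; try lia; simpl; unfold phi in *; field; lra.
Qed.

Definition lg_coef (m r : R) := / (r ^ 2 * (r + m / 2)).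
Definition lg_coef_d (m r : R) := - (3 * r ^ 2 + m * r) / (r ^ 2 * (r + m / 2)) ^ 2.
Definition log_grad_d (m : R) (l j : nat) (x : pt) :=
  - m * (kron l j * lg_coef m (norm3 x) + x l * (lg_coef_d m (norm3 x) * (x j / norm3 x))).

Lemma lg_coef_deriv m r : 0 < m -> 0 < r -> derivable_pt_lim (lg_coef m) r (lg_coef_d m r).
Proof.
  intros Hm Hr. unfold lg_coef, lg_coef_d. apply is_derive_Reals. auto_derive.
  - apply Rgt_not_eq. apply Rmult_gt_0_compat; [nra | lra].
  - field. split; lra.
Qed.

Lemma log_grad_deriv m l j x : 0 < m -> (l < 3)%nat -> (j < 3)%nat -> 0 < norm3 x ->
  derivable_pt_lim (fun t => log_grad m l (shift x j t)) 0 (log_grad_d m l j x).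
Proof.
  intros Hm Hl Hj HN.
  apply (derivable_pt_lim_ext_loc
           (fun t => (- m * (x l + kron l j * t)) * lg_coef m (norm3 (shift x j t))) _ _ _ 1);
    [lra | intros t _; unfold log_grad, lg_coef, kron; rewrite shift_eval;
           destruct (Nat.eqb l j); unfold Rdiv; ring |].
  replace (log_grad_d m l j x) with
    ((- m * kron l j) * lg_coef m (norm3 (shift x j 0))
     + (- m * (x l + kron l j * 0)) * (lg_coef_d m (norm3 x) * (x j / norm3 x)))
    by (rewrite shift0; unfold log_grad_d; ring).
  apply (derivable_pt_lim_mult (fun t => - m * (x l + kron l j * t))
                               (fun t => lg_coef m (norm3 (shift x j t)))).
  - apply is_derive_Reals. auto_derive; auto. ring.
  - apply (radial_shift_deriv x j (lg_coef m)); auto. apply lg_coef_deriv; auto.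
Qed.

Definition christoffel_d (m : R) (i j k d : nat) (x : pt) :=
  kron i j * log_grad_d m k d x + kron i k * log_grad_d m j d x - kron j k * log_grad_d m i d x.

(** Partial derivatives of the Christoffel symbols of [g] (which agree with
    [christoffel] on a neighbourhood). *)
Lemma pd_Gamma m i j k d x : 0 < m -> 0 < norm3 x ->
  (i < 3)%nat -> (j < 3)%nat -> (k < 3)%nat -> (d < 3)%nat ->
  pd d (Gamma m i j k) x = christoffel_d m i j k d x.
Proof.
  intros Hm HN Hi Hj Hk Hd. apply pd_eq.
  apply (derivable_pt_lim_ext_loc (fun t => christoffel m i j k (shift x d t)) _ _ _ (norm3 x));
    [lra | intros t Ht; rewrite Rminus_0_r in Ht; symmetry;
           apply Gamma_eq; auto; apply norm3_shift_pos; auto |].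
  unfold christoffel, christoffel_d.
  apply derivable_pt_lim_minus; [apply derivable_pt_lim_plus |];
    apply (derivable_pt_lim_scal (fun t => log_grad m _ (shift x d t))); apply log_grad_deriv; auto.
Qed.

Lemma norm3_emb x y : norm3 (emb x y) = sqrt (x ^ 2 + y ^ 2).
Proof. unfold norm3, emb. simpl. f_equal. ring. Qed.

Lemma Ric22 m x y : 0 < m -> 0 < x ^ 2 + y ^ 2 ->
  Ric m 2 2 (emb x y) = m / (sqrt (x^2 + y^2) * (sqrt (x^2 + y^2) + m / 2) ^ 2).
Proof.
  intros Hm Hxy. rewrite <- norm3_emb.
  assert (HN : 0 < norm3 (emb x y)) by (rewrite norm3_emb; apply sqrt_lt_R0; auto).
  assert (Hr : norm3 (emb x y) ^ 2 = x ^ 2 + y ^ 2) by (rewrite norm3_emb; apply pow2_sqrt; lra).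
  unfold Ric, sum3. rewrite !pd_Gamma, !Gamma_eq by (auto; lia).
  unfold christoffel_d, christoffel, log_grad_d, log_grad, kron, lg_coef, lg_coef_d.
  set (r := norm3 (emb x y)) in *.
  unfold emb. simpl.
  assert (r <> 0) by lra. assert (r + m/2 <> 0) by lra.
  field_simplify; try lra.
  replace (y ^ 2) with (r ^ 2 - x ^ 2) by lra.
  assert (0 < m ^ 2 * r + 4 * m * r ^ 2 + 4 * r ^ 3)
    by (apply Rplus_lt_0_compat; [apply Rplus_lt_0_compat |];
        repeat apply Rmult_lt_0_compat; try apply pow_lt; lra).
  assert (0 < m ^ 2 * r ^ 5 + 4 * m * r ^ 6 + 4 * r ^ 7)
    by (apply Rplus_lt_0_compat; [apply Rplus_lt_0_compat |];
        repeat apply Rmult_lt_0_compat; try apply pow_lt; lra).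
  field. lra.
Qed.

(** The Jacobi potential in flat coordinates: [V r = m / (r (r + m/2)^2)]. *)
Definition Vpot (m r : R) := m / (r * (r + m / 2) ^ 2).

(** Conformal invariance of the Dirichlet energy in dimension two: the integrand
    of [Q] is the Euclidean [|grad u|^2 - V(|x|) u^2]. *)
Lemma integrand_eq m u x y : 0 < m -> 0 < x ^ 2 + y ^ 2 ->
  (gradnorm2 m u x y - RicNN m (emb x y) * u x y ^ 2) * areadens m x y =
  pdu 0 u x y ^ 2 + pdu 1 u x y ^ 2 - Vpot m (sqrt (x^2 + y^2)) * u x y ^ 2.
Proof.
  intros Hm Hxy.
  assert (HN : 0 < norm3 (emb x y)) by (rewrite norm3_emb; apply sqrt_lt_R0; auto).
  pose proof (phi_pos m (emb x y) Hm HN) as Hp.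
  set (p := phi m (emb x y)) in *.
  assert (Ha : areadens m x y = p ^ 4).
  { unfold areadens, det2, hmet, gmet. simpl. fold p.
    replace (p * (p * (p * (p * 1))) * (p * (p * (p * (p * 1)))) - 0 * 0) with ((p^4)^2) by ring.
    rewrite sqrt_pow2; [ring | apply pow_le; lra]. }
  assert (Hg : gradnorm2 m u x y = (pdu 0 u x y ^ 2 + pdu 1 u x y ^ 2) / p ^ 4).
  { unfold gradnorm2, sum2, inv2, det2, hmet, gmet. simpl. fold p. field. lra. }
  assert (Hs : sqrt (ginv m 2 2 (emb x y)) = / p ^ 2).
  { rewrite ginv_eq by (auto; lia). unfold kron. simpl. fold p.
    replace (1 / (p * (p * (p * (p * 1))))) with ((/ p ^ 2) ^ 2) by (field; lra).
    rewrite sqrt_pow2; [reflexivity |]. apply Rlt_le, Rinv_0_lt_compat. simpl; nra. }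
  assert (Hric : RicNN m (emb x y) = Ric m 2 2 (emb x y) / p ^ 4).
  { unfold RicNN, sum3, Nvec. rewrite Hs, !ginv_eq by (auto; lia). unfold kron. simpl. fold p.
    field. lra. }
  rewrite Ha, Hg, Hric, Ric22 by auto. unfold Vpot.
  assert (0 < sqrt (x^2 + y^2)) by (apply sqrt_lt_R0; auto).
  field. repeat split; try lra.
Qed.

(** * The second variation in polar coordinates *)

Definition C1_data (u ux uy : R -> R -> R) :=
  (forall x y, derivable_pt_lim (fun t => u t y) x (ux x y)) /\
  (forall x y, derivable_pt_lim (fun t => u x t) y (uy x y)) /\
  (forall x y, continuity_2d_pt u x y) /\
  (forall x y, continuity_2d_pt ux x y) /\
  (forall x y, continuity_2d_pt uy x y).

Lemma pdu0_eq u ux x y :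
  (forall x y, derivable_pt_lim (fun t => u t y) x (ux x y)) -> pdu 0 u x y = ux x y.
Proof.
  intro H. unfold pdu. apply pd_eq. unfold shift, emb. simpl.
  apply (derivable_pt_lim_translate (fun t => u t y)). auto.
Qed.

Lemma pdu1_eq u uy x y :
  (forall x y, derivable_pt_lim (fun t => u x t) y (uy x y)) -> pdu 1 u x y = uy x y.
Proof.
  intro H. unfold pdu. apply pd_eq. unfold shift, emb. simpl.
  apply (derivable_pt_lim_translate (fun t => u x t)). auto.
Qed.

Definition polar (u : R -> R -> R) r t := u (r * cos t) (r * sin t).

Lemma polar_sq r t : (r * cos t) ^ 2 + (r * sin t) ^ 2 = r ^ 2.
Proof.
  pose proof (sin2_cos2 t) as H. unfold Rsqr in H.
  replace (r ^ 2) with (r ^ 2 * 1) by ring. rewrite <- H. ring.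
Qed.

Definition energy_density m (u ux uy : R -> R -> R) r t :=
  polar ux r t ^ 2 + polar uy r t ^ 2 - Vpot m r * polar u r t ^ 2.
Definition radial_energy m u ux uy r := RInt (energy_density m u ux uy r) 0 (2 * PI) * r.

Lemma Vpot_cont m r : 0 < m -> 0 < r -> continuity_pt (Vpot m) r.
Proof.
  intros Hm Hr. eapply continuity_pt_of_is_derive. unfold Vpot. auto_derive.
  - apply Rgt_not_eq. apply Rmult_lt_0_compat; auto. nra.
  - reflexivity.
Qed.

Lemma energy_density_cont m u ux uy r t : 0 < m -> 0 < r -> C1_data u ux uy ->
  continuity_2d_pt (energy_density m u ux uy) r t.
Proof.
  intros Hm Hr [_ [_ [Cu [Cx Cy]]]]. unfold energy_density, polar.
  apply continuity_2d_pt_minus; [apply continuity_2d_pt_plus | apply continuity_2d_pt_mult].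
  - apply continuity_2d_pt_sqr, (continuity_2d_pt_polar ux). auto.
  - apply continuity_2d_pt_sqr, (continuity_2d_pt_polar uy). auto.
  - apply (continuity_1d_2d_pt_comp (Vpot m) (fun r _ => r)).
    + apply Vpot_cont; auto.
    + apply continuity_2d_pt_id1.
  - apply continuity_2d_pt_sqr, (continuity_2d_pt_polar u). auto.
Qed.

Lemma radial_energy_cont m u ux uy r : 0 < m -> 0 < r -> C1_data u ux uy ->
  continuity_pt (radial_energy m u ux uy) r.
Proof.
  intros Hm Hr HC. pose proof PI_RGT_0. unfold radial_energy.
  apply continuity_pt_mult; [| apply derivable_continuous_pt, derivable_pt_id].
  apply RInt_param_cont; [lra | intros; apply energy_density_cont; auto |].
  exists r. split; auto. intros v Hv. apply ex_RInt_snd. intros.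
  apply energy_density_cont; auto. apply Rabs_def2 in Hv. lra.
Qed.

Lemma ex_RInt_radial_energy m u ux uy a b : 0 < m -> 0 < a -> 0 < b -> C1_data u ux uy ->
  ex_RInt (radial_energy m u ux uy) a b.
Proof.
  intros. apply ex_RInt_cont. intros z Hz. apply radial_energy_cont; auto.
  destruct (Rle_dec a b); [rewrite Rmin_left in Hz | rewrite Rmin_right in Hz]; lra.
Qed.

Lemma Qform_polar m Rad u ux uy : 0 < m -> m / 2 <= Rad -> C1_data u ux uy ->
  Qform m Rad u = RInt (radial_energy m u ux uy) (m / 2) Rad.
Proof.
  intros Hm HR HC. pose proof PI_RGT_0. pose proof HC as [Hx [Hy _]].
  unfold Qform, annulus_int. apply Rint_eq; auto.
  - apply ex_RInt_radial_energy; auto; lra.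
  - intros r Hr. unfold radial_energy. f_equal. apply Rint_eq; [lra | |].
    + apply ex_RInt_snd. intros. apply energy_density_cont; auto. lra.
    + intros t Ht. rewrite integrand_eq; auto.
      * rewrite (pdu0_eq u ux), (pdu1_eq u uy), polar_sq, sqrt_pow2 by (auto; lra).
        reflexivity.
      * rewrite polar_sq. apply pow_lt. lra.
Qed.

(** * The Jacobi field and the critical radius *)

(** In the variable [s = 2r/m], the radial Jacobi field of [Sigma_0] that
    satisfies the Neumann condition on the horizon [s = 1] is
    [w s = (4 + (s - 1)(2 - ln s)) / (s + 1)]. *)
Definition jacobi_num (s : R) := 4 + (s - 1) * (2 - ln s).
Definition jacobi (s : R) := jacobi_num s / (s + 1).
Definition jacobi_d (s : R) := - (2 * ln s + (s * s - 1) / s) / (s + 1) ^ 2.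

(** The equation [ln sqrt (2R/m) = (2R+m)/(2R-m)] defining [R*] reads
    [psi (2R/m) = 0]. *)
Definition psi (s : R) := ln s - 2 - 4 / (s - 1).

Lemma jacobi_deriv s : 0 < s -> derivable_pt_lim jacobi s (jacobi_d s).
Proof.
  intro Hs. unfold jacobi, jacobi_num, jacobi_d. apply is_derive_Reals. auto_derive.
  - repeat split; lra.
  - field. lra.
Qed.

Lemma jacobi_equation s : 0 < s ->
  derivable_pt_lim (fun s => s * jacobi_d s) s (- 2 * jacobi s / (s + 1) ^ 2).
Proof.
  intro Hs. unfold jacobi, jacobi_num, jacobi_d. apply is_derive_Reals. auto_derive.
  - repeat split; try lra; apply Rgt_not_eq; nra.
  - field. repeat split; try lra; apply Rgt_not_eq; nra.
Qed.

Lemma jacobi_d_1 : jacobi_d 1 = 0.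
Proof. unfold jacobi_d. rewrite ln_1. field. Qed.

Lemma ln_pos s : 1 < s -> 0 < ln s.
Proof. intro. rewrite <- ln_1. apply ln_increasing; lra. Qed.

Lemma jacobi_d_neg s : 1 < s -> jacobi_d s < 0.
Proof.
  intro Hs. unfold jacobi_d. pose proof (ln_pos s Hs).
  assert (0 < (s * s - 1) / s) by (apply Rdiv_lt_0_compat; nra).
  assert (0 < (2 * ln s + (s * s - 1) / s) / (s + 1) ^ 2)
    by (apply Rdiv_lt_0_compat; [lra | apply pow_lt; lra]).
  unfold Rdiv in *. lra.
Qed.

Lemma psi_increasing a b : 1 < a -> a < b -> psi a < psi b.
Proof.
  intros Ha Hab. unfold psi. pose proof (ln_increasing a b ltac:(lra) Hab).
  assert (4 / (b - 1) < 4 / (a - 1)).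
  { unfold Rdiv. apply Rmult_lt_compat_l; [lra |]. apply Rinv_lt_contravar; nra. }
  lra.
Qed.

Lemma jacobi_num_psi s : 1 < s -> jacobi_num s = - (s - 1) * psi s.
Proof. intro. unfold jacobi_num, psi. field. lra. Qed.

Lemma ln_2_lt_1 : ln 2 < 1.
Proof.
  rewrite <- (ln_exp 1). apply ln_increasing; [lra |].
  pose proof (exp_ineq1 1 ltac:(lra)). lra.
Qed.

(** [psi] changes sign on [[2, e^4]]. *)
Lemma psi_root : { s | 1 < s /\ psi s = 0 }.
Proof.
  assert (He : 5 < exp 4) by (pose proof (exp_ineq1 4 ltac:(lra)); lra).
  destruct (Ranalysis5.IVT_interv psi 2 (exp 4)) as [z [Hz1 Hz2]].
  - intros a Ha. apply derivable_continuous_pt. unfold psi.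
    apply derivable_pt_minus; [apply derivable_pt_minus |].
    + exists (/ a). apply derivable_pt_lim_ln. lra.
    + apply derivable_pt_const.
    + apply derivable_pt_div; [apply derivable_pt_const | | lra].
      apply derivable_pt_minus; [apply derivable_pt_id | apply derivable_pt_const].
  - lra.
  - unfold psi. pose proof ln_2_lt_1. assert (4 / (2 - 1) = 4) by field. lra.
  - unfold psi. rewrite ln_exp. assert (4 / (exp 4 - 1) < 1).
    { apply (Rmult_lt_reg_r (exp 4 - 1)); [lra |].
      unfold Rdiv. rewrite Rmult_assoc, Rinv_l; lra. }
    lra.
  - exists z. split; [lra | auto].
Qed.

(** [s* = 2 R* / m], the first zero of the Jacobi field. *)
Definition s_star : R := proj1_sig psi_root.

Lemma s_star_gt1 : 1 < s_star.
Proof. unfold s_star. destruct psi_root as [s [H1 H2]]. auto. Qed.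

Lemma psi_s_star : psi s_star = 0.
Proof. unfold s_star. destruct psi_root as [s [H1 H2]]. auto. Qed.

Lemma psi_root_unique s : 1 < s -> psi s = 0 -> s = s_star.
Proof.
  intros Hs Hp. pose proof s_star_gt1. pose proof psi_s_star.
  destruct (Rtotal_order s s_star) as [Hlt | [Heq | Hgt]]; auto.
  - pose proof (psi_increasing s s_star Hs Hlt). lra.
  - pose proof (psi_increasing s_star s ltac:(lra) Hgt). lra.
Qed.

Lemma jacobi_pos s : 1 <= s -> s < s_star -> 0 < jacobi s.
Proof.
  intros H1 H2. unfold jacobi. apply Rdiv_lt_0_compat; [| lra].
  destruct (Req_dec s 1) as [-> | Hne].
  - unfold jacobi_num. rewrite ln_1. lra.
  - rewrite jacobi_num_psi by lra.
    pose proof (psi_increasing s s_star ltac:(lra) H2) as Hp. rewrite psi_s_star in Hp. nra.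
Qed.

Lemma jacobi_s_star : jacobi s_star = 0.
Proof.
  unfold jacobi. rewrite jacobi_num_psi by (apply s_star_gt1). rewrite psi_s_star.
  unfold Rdiv. ring.
Qed.

Lemma jacobi_neg s : s_star < s -> jacobi s < 0.
Proof.
  intros H. pose proof s_star_gt1. unfold jacobi, Rdiv.
  apply Rmult_neg_pos; [| apply Rinv_0_lt_compat; lra].
  rewrite jacobi_num_psi by lra.
  pose proof (psi_increasing s_star s ltac:(lra) H) as Hp. rewrite psi_s_star in Hp. nra.
Qed.

Lemma ln_sqrt x : 0 < x -> ln (sqrt x) = ln x / 2.
Proof.
  intro Hx. assert (Hs : 0 < sqrt x) by (apply sqrt_lt_R0; auto).
  assert (ln x = ln (sqrt x) + ln (sqrt x)).
  { rewrite <- ln_mult by auto. rewrite sqrt_sqrt; lra. }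
  lra.
Qed.

Lemma Rstar_eq_psi m Rs : 0 < m -> m / 2 < Rs -> (Rstar_eq m Rs <-> psi (2 * Rs / m) = 0).
Proof.
  intros Hm HR. unfold Rstar_eq.
  assert (Hs : 1 < 2 * Rs / m).
  { apply (Rmult_lt_reg_r m); auto. unfold Rdiv. rewrite Rmult_assoc, Rinv_l; lra. }
  rewrite ln_sqrt by lra.
  replace ((2 * Rs + m) / (2 * Rs - m)) with ((2 * Rs / m + 1) / (2 * Rs / m - 1)) by (field; lra).
  unfold psi.
  replace (4 / (2 * Rs / m - 1)) with (2 * ((2 * Rs / m + 1) / (2 * Rs / m - 1)) - 2)
    by (field; lra).
  split; intro; lra.
Qed.

(** * Stability up to the critical radius *)

Definition polar_dr (ux uy : R -> R -> R) r t := cos t * polar ux r t + sin t * polar uy r t.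

Lemma polar_deriv u ux uy r t : C1_data u ux uy ->
  derivable_pt_lim (fun z => polar u z t) r (polar_dr ux uy r t).
Proof.
  intros [Hx [Hy [_ [Cx _]]]]. apply (derivable_pt_lim_translate (fun z => polar u z t)).
  apply (derivable_pt_lim_ext_loc
           (fun h => u (r * cos t + h * cos t) (r * sin t + h * sin t)) _ _ _ 1);
    [lra | intros; unfold polar; f_equal; ring |].
  unfold polar_dr, polar. apply directional_derivative; auto.
Qed.

Lemma polar_dr_cont u ux uy r t : C1_data u ux uy -> continuity_2d_pt (polar_dr ux uy) r t.
Proof.
  intros [_ [_ [_ [Cx Cy]]]]. unfold polar_dr, polar.
  apply continuity_2d_pt_plus; apply continuity_2d_pt_mult;
    auto using continuity_2d_pt_cos2, continuity_2d_pt_sin2, continuity_2d_pt_polar.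
Qed.

Lemma polar_cont u r t : (forall x y, continuity_2d_pt u x y) -> continuity_2d_pt (polar u) r t.
Proof. intro Cu. apply (continuity_2d_pt_polar u). auto. Qed.

Definition circ_mass u r := RInt (fun t => polar u r t ^ 2) 0 (2 * PI).
Definition circ_mass_d u ux uy r := RInt (fun t => 2 * polar u r t * polar_dr ux uy r t) 0 (2 * PI).

Lemma polar_sq_deriv u ux uy z t : C1_data u ux uy ->
  is_derive (fun z => polar u z t ^ 2) z (2 * polar u z t * polar_dr ux uy z t).
Proof.
  intro HC. apply is_derive_Reals.
  replace (2 * polar u z t * polar_dr ux uy z t)
    with ((INR 2 * polar u z t ^ Init.Nat.pred 2) * polar_dr ux uy z t) by (simpl; ring).
  apply (derivable_pt_lim_comp (fun z => polar u z t) (fun y => y ^ 2)).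
  - apply polar_deriv; auto.
  - apply derivable_pt_lim_pow.
Qed.

Lemma polar_sq_d_cont u ux uy r t : C1_data u ux uy ->
  continuity_2d_pt (fun a b => 2 * polar u a b * polar_dr ux uy a b) r t.
Proof.
  intros HC. pose proof HC as [_ [_ [Cu _]]].
  apply continuity_2d_pt_mult; [apply continuity_2d_pt_mult |].
  - apply continuity_2d_pt_const.
  - apply polar_cont; auto.
  - apply (polar_dr_cont u); auto.
Qed.

Lemma ex_RInt_polar_sq u r : (forall x y, continuity_2d_pt u x y) ->
  ex_RInt (fun t => polar u r t ^ 2) 0 (2 * PI).
Proof.
  intros. apply (ex_RInt_snd (fun a b => polar u a b ^ 2)). intros.
  apply continuity_2d_pt_sqr, polar_cont. auto.
Qed.

Lemma circ_mass_deriv u ux uy r : C1_data u ux uy ->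
  is_derive (circ_mass u) r (circ_mass_d u ux uy r).
Proof.
  intro HC. pose proof HC as [_ [_ [Cu _]]]. pose proof PI_RGT_0.
  unfold circ_mass, circ_mass_d.
  rewrite (RInt_ext _ (fun t => Derive (fun z => polar u z t ^ 2) r))
    by (intros; symmetry; apply is_derive_unique, polar_sq_deriv; auto).
  apply (is_derive_RInt_param (fun z t => polar u z t ^ 2)).
  - exists (mkposreal 1 Rlt_0_1). intros. eexists. apply (polar_sq_deriv u ux uy); auto.
  - intros t _.
    apply (continuity_2d_pt_ext (fun a b => 2 * polar u a b * polar_dr ux uy a b));
      [intros; symmetry; apply is_derive_unique, polar_sq_deriv; auto |].
    apply polar_sq_d_cont; auto.
  - exists (mkposreal 1 Rlt_0_1). intros. apply ex_RInt_polar_sq; auto.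
Qed.

Lemma circ_mass_circle u Rad : (forall x y, x ^ 2 + y ^ 2 = Rad ^ 2 -> u x y = 0) ->
  circ_mass u Rad = 0.
Proof.
  intro H. apply RInt_zero_fun. intro t. unfold polar. rewrite H; [ring | apply polar_sq].
Qed.

Lemma circ_mass_d_circle u ux uy Rad : (forall x y, x ^ 2 + y ^ 2 = Rad ^ 2 -> u x y = 0) ->
  circ_mass_d u ux uy Rad = 0.
Proof.
  intro H. apply RInt_zero_fun. intro t. unfold polar. rewrite H; [ring | apply polar_sq].
Qed.

(** The logarithmic derivative [Phi = r w_r / w] of the Jacobi field solves the
    Riccati equation [Phi' = - r V - Phi^2 / r] wherever [w <> 0]. *)
Definition riccati m r := let s := 2 * r / m in s * jacobi_d s / jacobi s.
Definition riccati_d m r := - r * Vpot m r - riccati m r ^ 2 / r.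

Lemma scale_deriv m r : 0 < m -> derivable_pt_lim (fun r => 2 * r / m) r (2 / m).
Proof. intro Hm. apply is_derive_Reals. auto_derive; auto. field. lra. Qed.

Lemma riccati_deriv m r : 0 < m -> 0 < r -> jacobi (2 * r / m) <> 0 ->
  derivable_pt_lim (riccati m) r (riccati_d m r).
Proof.
  intros Hm Hr HW. set (s := 2 * r / m).
  assert (Hs : 0 < s) by (unfold s; apply Rdiv_lt_0_compat; lra).
  assert (Dn : derivable_pt_lim (fun r => (2 * r / m) * jacobi_d (2 * r / m)) r
                 (- 2 * jacobi s / (s + 1) ^ 2 * (2 / m)))
    by (apply (derivable_pt_lim_comp (fun r => 2 * r / m) (fun s => s * jacobi_d s));
        [apply scale_deriv | apply jacobi_equation]; auto).
  assert (Dd : derivable_pt_lim (fun r => jacobi (2 * r / m)) r (jacobi_d s * (2 / m)))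
    by (apply (derivable_pt_lim_comp (fun r => 2 * r / m) jacobi);
        [apply scale_deriv | apply jacobi_deriv]; auto).
  pose proof (derivable_pt_lim_div _ _ _ _ _ Dn Dd HW) as D.
  replace (riccati_d m r) with
    ((- 2 * jacobi s / (s + 1) ^ 2 * (2 / m) * jacobi (2 * r / m)
      - jacobi_d s * (2 / m) * (2 * r / m * jacobi_d (2 * r / m))) / (jacobi (2 * r / m))²).
  - exact D.
  - fold s. unfold riccati_d, riccati, Vpot, Rsqr. fold s.
    replace r with (s * m / 2) by (unfold s; field; lra).
    field. repeat split; try lra; auto. apply Rgt_not_eq; nra.
Qed.

Lemma riccati_half m : 0 < m -> riccati m (m / 2) = 0.
Proof.
  intro. unfold riccati. replace (2 * (m / 2) / m) with 1 by (field; lra).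
  rewrite jacobi_d_1. unfold Rdiv. ring.
Qed.

Lemma picone_pointwise r V F p a b c s : 0 < r -> s * s + c * c = 1 ->
  (- r * V - F ^ 2 / r) * p ^ 2 + F * (2 * p * (c * a + s * b)) <= r * (a ^ 2 + b ^ 2 - V * p ^ 2).
Proof.
  intros Hr Hsc.
  assert (E : r * (a ^ 2 + b ^ 2 - V * p ^ 2)
              - ((- r * V - F ^ 2 / r) * p ^ 2 + F * (2 * p * (c * a + s * b)))
              = (r * (c * a + s * b) - F * p) ^ 2 / r + r * (s * a - c * b) ^ 2).
  { replace (a ^ 2 + b ^ 2) with ((a ^ 2 + b ^ 2) * (s * s + c * c)) by (rewrite Hsc; ring).
    field. lra. }
  assert (0 <= (r * (c * a + s * b) - F * p) ^ 2 / r)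
    by (apply Rdiv_le_0_compat; [apply pow2_ge_0 | lra]).
  assert (0 <= r * (s * a - c * b) ^ 2) by (apply Rmult_le_pos; [lra | apply pow2_ge_0]).
  lra.
Qed.

(** [E r = int_{m/2}^r h - Phi(r) J(r)] is nondecreasing where [w > 0]. *)
Definition energy_gap m u ux uy r :=
  RInt (radial_energy m u ux uy) (m / 2) r - riccati m r * circ_mass u r.
Definition energy_gap_d m u ux uy r :=
  radial_energy m u ux uy r - (riccati_d m r * circ_mass u r + riccati m r * circ_mass_d u ux uy r).

Lemma energy_gap_d_nonneg m u ux uy r : 0 < m -> 0 < r -> C1_data u ux uy ->
  0 <= energy_gap_d m u ux uy r.
Proof.
  intros Hm Hr HC. pose proof HC as [_ [_ [Cu _]]]. pose proof PI_RGT_0.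
  unfold energy_gap_d, radial_energy, circ_mass, circ_mass_d.
  assert (EG : ex_RInt (energy_density m u ux uy r) 0 (2 * PI))
    by (apply (ex_RInt_snd (energy_density m u ux uy)); intros; apply energy_density_cont; auto).
  assert (E1 := ex_RInt_polar_sq u r Cu).
  assert (E2 : ex_RInt (fun t => 2 * polar u r t * polar_dr ux uy r t) 0 (2 * PI))
    by (apply (ex_RInt_snd (fun a b => 2 * polar u a b * polar_dr ux uy a b));
        intros; apply polar_sq_d_cont; auto).
  rewrite Rmult_comm, <- RInt_scal_R, <- RInt_scal_R, <- RInt_scal_R by auto.
  rewrite <- RInt_plus_R by (apply ex_RInt_scal_R; auto).
  assert (RInt (fun t => riccati_d m r * polar u r t ^ 2
                         + riccati m r * (2 * polar u r t * polar_dr ux uy r t)) 0 (2 * PI)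
          <= RInt (fun t => r * energy_density m u ux uy r t) 0 (2 * PI)).
  { apply RInt_le; [lra | apply ex_RInt_plus_R; apply ex_RInt_scal_R; auto
                   | apply ex_RInt_scal_R; auto |].
    intros t _. unfold energy_density, riccati_d, polar_dr.
    apply picone_pointwise; auto.
    pose proof (sin2_cos2 t) as Hsc. unfold Rsqr in Hsc. lra. }
  lra.
Qed.

Lemma radial_energy_primitive m u ux uy r : 0 < m -> 0 < r -> C1_data u ux uy ->
  derivable_pt_lim (fun b => RInt (radial_energy m u ux uy) (m / 2) b) r (radial_energy m u ux uy r).
Proof.
  intros Hm Hr HC. apply is_derive_Reals.
  apply (is_derive_RInt (radial_energy m u ux uy)
           (fun b => RInt (radial_energy m u ux uy) (m / 2) b) (m / 2)).
  - exists (mkposreal r Hr). intros y Hy. apply (RInt_correct (V := R_CompleteNormedModule)).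
    apply ex_RInt_radial_energy; auto; [lra |].
    change (Rabs (y - r) < r) in Hy. apply Rabs_def2 in Hy. lra.
  - apply continuity_pt_filterlim. apply radial_energy_cont; auto.
Qed.

Lemma energy_gap_deriv m u ux uy r : 0 < m -> 0 < r -> jacobi (2 * r / m) <> 0 ->
  C1_data u ux uy -> derivable_pt_lim (energy_gap m u ux uy) r (energy_gap_d m u ux uy r).
Proof.
  intros Hm Hr HW HC. unfold energy_gap, energy_gap_d.
  apply derivable_pt_lim_minus; [apply radial_energy_primitive; auto |].
  apply derivable_pt_lim_mult; [apply riccati_deriv; auto |].
  apply is_derive_Reals, circ_mass_deriv; auto.
Qed.

Lemma energy_gap_half m u ux uy : 0 < m -> energy_gap m u ux uy (m / 2) = 0.
Proof.
  intro. unfold energy_gap. rewrite RInt_point, riccati_half by auto.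
  unfold zero; simpl. ring.
Qed.

Lemma jacobi_pos_scaled m r : 0 < m -> m / 2 <= r -> r < m * s_star / 2 ->
  0 < jacobi (2 * r / m).
Proof.
  intros Hm H1 H2. apply jacobi_pos.
  - apply (Rmult_le_reg_r m); auto. unfold Rdiv. rewrite Rmult_assoc, Rinv_l; lra.
  - apply (Rmult_lt_reg_r m); auto. unfold Rdiv. rewrite Rmult_assoc, Rinv_l; lra.
Qed.

Lemma energy_gap_nonneg m u ux uy s : 0 < m -> m / 2 < s -> s < m * s_star / 2 ->
  C1_data u ux uy -> 0 <= energy_gap m u ux uy s.
Proof.
  intros Hm H1 H2 HC.
  destruct (MVT_cor2 (energy_gap m u ux uy) (energy_gap_d m u ux uy) (m / 2) s H1)
    as [c [Hc1 Hc2]].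
  - intros c Hc. apply energy_gap_deriv; auto; [lra |].
    apply Rgt_not_eq, (jacobi_pos_scaled m c); auto; lra.
  - rewrite energy_gap_half in Hc1 by auto.
    pose proof (energy_gap_d_nonneg m u ux uy c Hm ltac:(lra) HC). nra.
Qed.

(** At the critical radius itself, [Phi J -> 0] since [w] has a simple zero
    there while [J] vanishes to second order. *)
Lemma riccati_mass_vanishes m u ux uy : 0 < m -> C1_data u ux uy ->
  (forall x y, x ^ 2 + y ^ 2 = (m * s_star / 2) ^ 2 -> u x y = 0) ->
  forall eps, 0 < eps -> exists d, 0 < d /\ forall h, h <> 0 -> Rabs h < d ->
    Rabs (riccati m (m * s_star / 2 + h) * circ_mass u (m * s_star / 2 + h)) <= eps.
Proof.
  intros Hm HC Hu eps Heps. pose proof s_star_gt1.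
  set (Rs := m * s_star / 2).
  assert (Hsig : 2 * Rs / m = s_star) by (unfold Rs; field; lra).
  destruct (vanishing_quotient (fun s => 2 * s / m * jacobi_d (2 * s / m)) (circ_mass u)
              (fun s => jacobi (2 * s / m)) Rs (jacobi_d s_star * (2 / m)))
    with (eps := eps) as [d [Hd K]]; auto.
  - eapply continuity_pt_of_is_derive. unfold jacobi_d. auto_derive; [| reflexivity].
    assert (0 < 2 * Rs / m) by (rewrite Hsig; lra).
    repeat split; try lra. apply Rgt_not_eq. nra.
  - apply (derivable_pt_lim_comp (fun s => 2 * s / m) jacobi); [apply scale_deriv; auto |].
    rewrite Hsig. apply jacobi_deriv. lra.
  - pose proof (jacobi_d_neg s_star ltac:(lra)).
    assert (0 < 2 / m) by (apply Rdiv_lt_0_compat; lra). nra.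
  - rewrite Hsig. apply jacobi_s_star.
  - rewrite <- (circ_mass_d_circle u ux uy Rs Hu).
    apply is_derive_Reals, circ_mass_deriv; auto.
  - apply circ_mass_circle; auto.
  - exists d. split; auto. intros h Hh0 Hh. unfold riccati.
    replace (2 * (Rs + h) / m * jacobi_d (2 * (Rs + h) / m) / jacobi (2 * (Rs + h) / m)
             * circ_mass u (Rs + h))
      with (2 * (Rs + h) / m * jacobi_d (2 * (Rs + h) / m) * circ_mass u (Rs + h)
            / jacobi (2 * (Rs + h) / m)) by (unfold Rdiv; ring).
    apply K; auto.
Qed.

Lemma radial_energy_int_nonneg m u ux uy Rad : 0 < m -> m / 2 < Rad -> Rad <= m * s_star / 2 ->
  C1_data u ux uy -> (forall x y, x ^ 2 + y ^ 2 = Rad ^ 2 -> u x y = 0) ->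
  0 <= RInt (radial_energy m u ux uy) (m / 2) Rad.
Proof.
  intros Hm H1 H2 HC Hu.
  destruct (Rlt_or_le Rad (m * s_star / 2)) as [Hlt | Hge].
  - pose proof (energy_gap_nonneg m u ux uy Rad Hm H1 Hlt HC) as K. unfold energy_gap in K.
    rewrite circ_mass_circle in K by auto. lra.
  - assert (HR : Rad = m * s_star / 2) by lra. subst Rad.
    apply (nonneg_of_left_domination _ (fun s => riccati m s * circ_mass u s) _ (m * s_star / 2 - m / 2)).
    + apply derivable_continuous_pt. eexists. apply radial_energy_primitive; auto; lra.
    + lra.
    + intros h Hh. pose proof (energy_gap_nonneg m u ux uy (m * s_star / 2 + h) Hm
                                 ltac:(lra) ltac:(lra) HC) as K.
      unfold energy_gap in K. lra.
    + apply (riccati_mass_vanishes m u ux uy); auto.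
Qed.

Lemma stable_below_Rstar m Rad : 0 < m -> m / 2 < Rad -> Rad <= m * s_star / 2 -> stable m Rad.
Proof.
  intros Hm H1 H2 u Hs Hz.
  destruct (Hs 1%nat) as [Cu [ux [uy [Hx [Hy [Cx Cy]]]]]].
  assert (HC : C1_data u ux uy) by (repeat split; auto; apply cont2_iff; auto).
  rewrite (Qform_polar m Rad u ux uy Hm ltac:(lra) HC).
  apply radial_energy_int_nonneg; auto.
Qed.

(** * Smooth functions *)

Fixpoint Dn (n : nat) (P : R -> Prop) (f : R -> R) : Prop :=
  match n with
  | O => forall x, P x -> continuity_pt f x
  | S k => exists f', (forall x, P x -> derivable_pt_lim f x (f' x)) /\ Dn k P f'
  end.

Lemma Dn_cont n P f : Dn n P f -> forall x, P x -> continuity_pt f x.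
Proof.
  destruct n as [|n]; [intros H; exact H |].
  intros [f' [Hd _]] x Hx. apply derivable_continuous_pt. exists (f' x). apply Hd. exact Hx.
Qed.

Lemma Dn_down n P f : Dn (S n) P f -> Dn n P f.
Proof.
  revert f. induction n as [|n IH]; intros f H.
  - simpl. apply (Dn_cont 1 P f H).
  - destruct H as [f' [Hd H']]. exists f'. split; auto.
Qed.

Lemma Dn_ext n P f g : (forall x, f x = g x) -> Dn n P f -> Dn n P g.
Proof. intros H. replace g with f; auto. apply functional_extensionality; auto. Qed.

Lemma Dn_const n P c : Dn n P (fun _ => c).
Proof.
  revert c. induction n as [|n IH]; intro c; simpl.
  - intros. apply continuity_pt_const. intros a b; reflexivity.
  - exists (fun _ => 0). split; auto. intros. apply derivable_pt_lim_const.
Qed.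

Lemma Dn_id n P : Dn n P (fun x => x).
Proof.
  destruct n as [|n]; simpl.
  - intros. apply derivable_continuous_pt, derivable_pt_id.
  - exists (fun _ => 1). split; [intros; apply derivable_pt_lim_id | apply Dn_const].
Qed.

Lemma Dn_plus n P f g : Dn n P f -> Dn n P g -> Dn n P (fun x => f x + g x).
Proof.
  revert f g. induction n as [|n IH]; simpl; intros f g Hf Hg.
  - intros x Hx. apply (continuity_pt_plus f g); auto.
  - destruct Hf as [f' [Hf Hf']]. destruct Hg as [g' [Hg Hg']].
    exists (fun x => f' x + g' x). split; auto.
    intros. apply (derivable_pt_lim_plus f g); auto.
Qed.

Lemma Dn_mult n P f g : Dn n P f -> Dn n P g -> Dn n P (fun x => f x * g x).
Proof.
  revert f g. induction n as [|n IH]; simpl; intros f g Hf Hg.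
  - intros x Hx. apply (continuity_pt_mult f g); auto.
  - pose proof (Dn_down _ _ _ Hf) as Hfd. pose proof (Dn_down _ _ _ Hg) as Hgd.
    destruct Hf as [f' [Hf Hf']]. destruct Hg as [g' [Hg Hg']].
    exists (fun x => f' x * g x + f x * g' x). split.
    + intros. apply (derivable_pt_lim_mult f g); auto.
    + apply Dn_plus; apply IH; auto.
Qed.

Lemma Dn_comp n P Q f g : Dn n P f -> Dn n Q g -> (forall x, Q x -> P (g x)) ->
  Dn n Q (fun x => f (g x)).
Proof.
  revert f g. induction n as [|n IH]; simpl; intros f g Hf Hg HPQ.
  - intros x Hx. apply (continuity_pt_comp g f); auto.
  - pose proof (Dn_down _ _ _ Hg) as Hgd.
    destruct Hf as [f' [Hf Hf']]. destruct Hg as [g' [Hg Hg']].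
    exists (fun x => f' (g x) * g' x). split.
    + intros. apply (derivable_pt_lim_comp g f); auto.
    + apply Dn_mult; auto.
Qed.

Definition Rpos (x : R) := 0 < x.

Lemma Dn_inv n : Dn n Rpos Rinv.
Proof.
  induction n as [|n IH]; simpl.
  - intros x Hx. apply derivable_continuous_pt. exists (- / x ^ 2). apply is_derive_Reals.
    unfold Rpos in Hx. auto_derive; [lra | field; lra].
  - exists (fun x => -1 * (/ x * / x)). split.
    + intros x Hx. unfold Rpos in Hx. apply is_derive_Reals. auto_derive; [lra | field; lra].
    + apply Dn_mult; [apply Dn_const | apply Dn_mult; auto].
Qed.

Lemma Dn_ln n : Dn n Rpos ln.
Proof.
  destruct n as [|n]; simpl.
  - intros x Hx. apply derivable_continuous_pt. exists (/ x). apply derivable_pt_lim_ln. auto.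
  - exists Rinv. split; [intros; apply derivable_pt_lim_ln; auto | apply Dn_inv].
Qed.

Lemma Dn_sqrt n : Dn n Rpos sqrt.
Proof.
  induction n as [|n IH]; simpl.
  - intros x Hx. apply derivable_continuous_pt. exists (/ (2 * sqrt x)).
    apply derivable_pt_lim_sqrt. auto.
  - exists (fun x => / 2 * / sqrt x). split.
    + intros x Hx. unfold Rpos in Hx. assert (0 < sqrt x) by (apply sqrt_lt_R0; auto).
      replace (/ 2 * / sqrt x) with (/ (2 * sqrt x)) by (field; lra).
      apply derivable_pt_lim_sqrt. auto.
    + apply Dn_mult; [apply Dn_const |].
      apply (Dn_comp n Rpos Rpos Rinv sqrt); auto using Dn_inv.
      intros x Hx. apply sqrt_lt_R0. auto.
Qed.

Definition flat_exp (j : nat) (s : R) : R := if Rle_dec s 0 then 0 else (/ s) ^ j * exp (- / s).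

Lemma flat_exp_neg j s : s <= 0 -> flat_exp j s = 0.
Proof. intro. unfold flat_exp. destruct (Rle_dec s 0); auto; lra. Qed.

Lemma flat_exp_pos j s : 0 < s -> flat_exp j s = (/ s) ^ j * exp (- / s).
Proof. intro. unfold flat_exp. destruct (Rle_dec s 0); auto; lra. Qed.

(** [y^k e^{-y} <= (k+1)! / y], from the exponential series. *)
Lemma pow_exp_bound y k : 0 < y -> y ^ k * exp (- y) <= INR (Factorial.fact (S k)) / y.
Proof.
  intro Hy. pose proof (exp_ge_taylor y (S k) ltac:(lra)) as T.
  rewrite tech5 in T.
  assert (0 <= sum_f_R0 (fun k0 : nat => y ^ k0 / INR (Factorial.fact k0)) k).
  { apply cond_pos_sum. intro n. apply Rdiv_le_0_compat.
    - apply pow_le; lra.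
    - apply lt_0_INR, Factorial.lt_O_fact. }
  assert (Hf : 0 < INR (Factorial.fact (S k))) by apply lt_0_INR, Factorial.lt_O_fact.
  assert (Hb : y ^ S k / INR (Factorial.fact (S k)) <= exp y) by lra.
  rewrite exp_Ropp. pose proof (exp_pos y).
  apply (Rmult_le_reg_r (y * exp y)); [nra |].
  replace (y ^ k * / exp y * (y * exp y)) with (y ^ S k) by (simpl; field; lra).
  replace (INR (Factorial.fact (S k)) / y * (y * exp y))
    with (INR (Factorial.fact (S k)) * exp y) by (field; lra).
  apply (Rmult_le_compat_l (INR (Factorial.fact (S k)))) in Hb; [| lra].
  replace (INR (Factorial.fact (S k)) * (y ^ S k / INR (Factorial.fact (S k))))
    with (y ^ S k) in Hb by (field; lra).
  lra.
Qed.

Lemma flat_exp_quadratic j s : Rabs (flat_exp j s) <= INR (Factorial.fact (S (S j))) * s ^ 2.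
Proof.
  assert (HF : 0 < INR (Factorial.fact (S (S j)))) by apply lt_0_INR, Factorial.lt_O_fact.
  destruct (Rle_dec s 0) as [Hs | Hs].
  - rewrite flat_exp_neg, Rabs_R0 by auto. pose proof (pow2_ge_0 s). nra.
  - rewrite flat_exp_pos by lra.
    pose proof (pow_exp_bound (/ s) (S j) ltac:(apply Rinv_0_lt_compat; lra)) as K.
    rewrite Rabs_pos_eq by (apply Rmult_le_pos; [apply pow_le, Rlt_le, Rinv_0_lt_compat; lra
                                                 | apply Rlt_le, exp_pos]).
    apply (Rmult_le_compat_l s) in K; [| lra].
    replace (s * ((/ s) ^ S j * exp (- / s))) with ((/ s) ^ j * exp (- / s)) in K
      by (simpl; field; lra).
    replace (s * (INR (Factorial.fact (S (S j))) / / s))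
      with (INR (Factorial.fact (S (S j))) * s ^ 2) in K by (field; lra).
    exact K.
Qed.

Lemma flat_exp_deriv j s :
  derivable_pt_lim (flat_exp j) s (- INR j * flat_exp (S j) s + flat_exp (S (S j)) s).
Proof.
  destruct (Rtotal_order s 0) as [Hn | [H0 | Hp]].
  - rewrite !flat_exp_neg by lra. replace (- INR j * 0 + 0) with 0 by ring.
    apply (derivable_pt_lim_ext_loc (fun _ => 0) _ _ _ (- s)); [lra | | apply derivable_pt_lim_const].
    intros t Ht. rewrite flat_exp_neg; auto. apply Rabs_def2 in Ht. lra.
  - subst s. rewrite !flat_exp_neg by lra. replace (- INR j * 0 + 0) with 0 by ring.
    apply derivable_pt_lim_little_o; [apply flat_exp_neg; lra |].
    intros e He. set (F := INR (Factorial.fact (S (S j)))).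
    assert (HF : 0 < F) by apply lt_0_INR, Factorial.lt_O_fact.
    exists (e / F). split; [apply Rdiv_lt_0_compat; lra |]. intros h Hh.
    eapply Rle_trans; [apply flat_exp_quadratic |]. fold F.
    rewrite <- (pow2_abs h). pose proof (Rabs_pos h).
    apply (Rmult_lt_compat_l F) in Hh; [| lra].
    replace (F * (e / F)) with e in Hh by (field; lra). simpl. nra.
  - rewrite !flat_exp_pos by lra.
    apply (derivable_pt_lim_ext_loc (fun s => (/ s) ^ j * exp (- / s)) _ _ _ s);
      [lra | intros t Ht; apply Rabs_def2 in Ht; rewrite flat_exp_pos; auto; lra |].
    assert (Dp : derivable_pt_lim (fun s => (/ s) ^ j) s (INR j * (/ s) ^ Init.Nat.pred j * (- / s ^ 2))).
    { apply (derivable_pt_lim_comp Rinv (fun y => y ^ j)); [| apply derivable_pt_lim_pow].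
      apply is_derive_Reals. auto_derive; [lra | field; lra]. }
    assert (De : derivable_pt_lim (fun s => exp (- / s)) s (exp (- / s) * / s ^ 2)).
    { apply (derivable_pt_lim_comp (fun s => - / s) exp); [| apply derivable_pt_lim_exp].
      apply is_derive_Reals. auto_derive; [lra | field; lra]. }
    pose proof (derivable_pt_lim_mult _ _ _ _ _ Dp De) as D. simpl in D.
    replace (- INR j * ((/ s) ^ S j * exp (- / s)) + (/ s) ^ S (S j) * exp (- / s))
      with (INR j * (/ s) ^ Init.Nat.pred j * (- / s ^ 2) * exp (- / s)
            + (/ s) ^ j * (exp (- / s) * / s ^ 2)).
    + exact D.
    + destruct j as [|k]; [simpl; field; lra |].
      rewrite S_INR. simpl Init.Nat.pred. simpl. field. lra.
Qed.

Lemma Dn_flat_exp n j : Dn n (fun _ => True) (flat_exp j).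
Proof.
  revert j. induction n as [|n IH]; intro j; simpl.
  - intros x _. apply derivable_continuous_pt. eexists. apply flat_exp_deriv.
  - exists (fun s => - INR j * flat_exp (S j) s + flat_exp (S (S j)) s). split.
    + intros. apply flat_exp_deriv.
    + apply Dn_plus; auto. apply Dn_mult; auto. apply Dn_const.
Qed.

Lemma Cn_cont n f : Cn n f -> cont2 f.
Proof. destruct n; simpl; [auto | tauto]. Qed.

Lemma Cn_down n f : Cn (S n) f -> Cn n f.
Proof.
  revert f. induction n as [|n IH]; intros f H.
  - simpl. apply (Cn_cont 1 f H).
  - destruct H as [Hc [fx [fy [Hx [Hy [Cx Cy]]]]]]. split; auto.
    exists fx, fy. repeat split; auto.
Qed.

Lemma Cn_plus n f g : Cn n f -> Cn n g -> Cn n (fun x y => f x y + g x y).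
Proof.
  assert (Hc : forall a b, cont2 a -> cont2 b -> cont2 (fun x y => a x y + b x y))
    by (intros a b Ha Hb; apply cont2_iff; intros;
        apply continuity_2d_pt_plus; apply cont2_iff; auto).
  revert f g. induction n as [|n IH]; intros f g Hf Hg; [simpl in *; auto |].
  destruct Hf as [Cf [fx [fy [Hfx [Hfy [Cfx Cfy]]]]]].
  destruct Hg as [Cg [gx [gy [Hgx [Hgy [Cgx Cgy]]]]]].
  split; auto.
  exists (fun x y => fx x y + gx x y), (fun x y => fy x y + gy x y). repeat split; auto.
  - intros. apply (derivable_pt_lim_plus (fun t => f t y) (fun t => g t y)); auto.
  - intros. apply (derivable_pt_lim_plus (fun t => f x t) (fun t => g x t)); auto.
Qed.

Lemma Cn_mult n f g : Cn n f -> Cn n g -> Cn n (fun x y => f x y * g x y).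
Proof.
  assert (Hc : forall a b, cont2 a -> cont2 b -> cont2 (fun x y => a x y * b x y))
    by (intros a b Ha Hb; apply cont2_iff; intros;
        apply continuity_2d_pt_mult; apply cont2_iff; auto).
  revert f g. induction n as [|n IH]; intros f g Hf Hg; [simpl in *; auto |].
  pose proof (Cn_down _ _ Hf) as Hfd. pose proof (Cn_down _ _ Hg) as Hgd.
  destruct Hf as [Cf [fx [fy [Hfx [Hfy [Cfx Cfy]]]]]].
  destruct Hg as [Cg [gx [gy [Hgx [Hgy [Cgx Cgy]]]]]].
  split; auto.
  exists (fun x y => fx x y * g x y + f x y * gx x y), (fun x y => fy x y * g x y + f x y * gy x y).
  repeat split.
  - intros. apply (derivable_pt_lim_mult (fun t => f t y) (fun t => g t y)); auto.
  - intros. apply (derivable_pt_lim_mult (fun t => f x t) (fun t => g x t)); auto.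
  - apply Cn_plus; apply IH; auto.
  - apply Cn_plus; apply IH; auto.
Qed.

Lemma Cn_const n c : Cn n (fun _ _ => c).
Proof.
  revert c. induction n as [|n IH]; intro c;
    (assert (cont2 (fun _ _ => c)) by (apply cont2_iff; intros; apply continuity_2d_pt_const));
    simpl; auto.
  split; auto. exists (fun _ _ => 0), (fun _ _ => 0).
  repeat split; auto; intros; apply derivable_pt_lim_const.
Qed.

Lemma Cn_x n : Cn n (fun x _ => x).
Proof.
  assert (cont2 (fun x _ => x)) by (apply cont2_iff; intros; apply continuity_2d_pt_id1).
  destruct n as [|n]; simpl; auto.
  split; auto. exists (fun _ _ => 1), (fun _ _ => 0).
  repeat split; try apply Cn_const; intros.
  - apply derivable_pt_lim_id.
  - apply derivable_pt_lim_const.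
Qed.

Lemma Cn_y n : Cn n (fun _ y => y).
Proof.
  assert (cont2 (fun _ y => y)) by (apply cont2_iff; intros; apply continuity_2d_pt_id2).
  destruct n as [|n]; simpl; auto.
  split; auto. exists (fun _ _ => 0), (fun _ _ => 1).
  repeat split; try apply Cn_const; intros.
  - apply derivable_pt_lim_const.
  - apply derivable_pt_lim_id.
Qed.

Lemma Cn_comp1 n F g : Dn n (fun _ => True) F -> Cn n g -> Cn n (fun x y => F (g x y)).
Proof.
  assert (Hc : forall H h, (forall x, continuity_pt H x) -> cont2 h -> cont2 (fun x y => H (h x y)))
    by (intros H h HH Hh; apply cont2_iff; intros;
        apply continuity_1d_2d_pt_comp; [auto | apply cont2_iff; auto]).
  revert F g. induction n as [|n IH]; intros F g HF Hg.
  - simpl in *. apply Hc; auto.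
  - pose proof (Cn_down _ _ Hg) as Hgd. pose proof (Dn_cont _ _ _ HF) as CF.
    destruct HF as [F' [HF' DF']]. destruct Hg as [Cg [gx [gy [Hgx [Hgy [Cgx Cgy]]]]]].
    split; [apply Hc; auto |].
    exists (fun x y => F' (g x y) * gx x y), (fun x y => F' (g x y) * gy x y). repeat split.
    + intros. apply (derivable_pt_lim_comp (fun t => g t y) F); auto.
    + intros. apply (derivable_pt_lim_comp (fun t => g x t) F); auto.
    + apply Cn_mult; auto.
    + apply Cn_mult; auto.
Qed.

Lemma smooth_radial (G : R -> R) : (forall n, Dn n (fun _ => True) G) ->
  smooth2 (fun x y => G (x * x + y * y)).
Proof.
  intros HG n. apply (Cn_comp1 n G (fun x y => x * x + y * y)); auto.
  apply Cn_plus; apply Cn_mult; auto using Cn_x, Cn_y.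
Qed.

(** * Instability beyond the critical radius *)

(** A smooth map equal to the identity on [[s1, +oo)] and positive everywhere
    (for the constant [K] below); it lets us continue [r |-> w(2r/m)] inside
    the horizon to a smooth function of [x^2 + y^2]. *)
Definition transition (s1 K s : R) := s + (K + s * s) * flat_exp 0 (s1 - s).

Lemma Dn_transition n s1 K : Dn n (fun _ => True) (transition s1 K).
Proof.
  unfold transition. apply Dn_plus; [apply Dn_id |]. apply Dn_mult.
  - apply Dn_plus; [apply Dn_const | apply Dn_mult; apply Dn_id].
  - apply (Dn_comp n (fun _ => True) (fun _ => True) (flat_exp 0) (fun s => s1 - s)); auto.
    + apply Dn_flat_exp.
    + apply Dn_ext with (f := fun s => s1 + -1 * s); [intros; ring |].
      apply Dn_plus; [apply Dn_const | apply Dn_mult; [apply Dn_const | apply Dn_id]].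
Qed.

Lemma transition_id s1 K s : s1 <= s -> transition s1 K s = s.
Proof. intro. unfold transition. rewrite flat_exp_neg by lra. ring. Qed.

Lemma transition_pos s1 s : 0 < s1 ->
  0 < transition s1 (/ (exp (- / s1) * exp (- / s1))) s.
Proof.
  intro Hs1. set (c0 := exp (- / s1)). assert (Hc0 : 0 < c0) by apply exp_pos.
  unfold transition. destruct (Rle_dec s1 s).
  - rewrite flat_exp_neg by lra. lra.
  - rewrite flat_exp_pos by lra. simpl pow. rewrite Rmult_1_l.
    assert (HK : 0 < / (c0 * c0)) by (apply Rinv_0_lt_compat; nra).
    destruct (Rlt_le_dec 0 s).
    + assert (0 < (/ (c0 * c0) + s * s) * exp (- / (s1 - s)))
        by (apply Rmult_lt_0_compat; [nra | apply exp_pos]).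
      lra.
    + (* for [s <= 0]: [e^{-1/(s1-s)} >= c0], and [1/c0 + c0 s^2 + s > 0] *)
      assert (Hge : c0 <= exp (- / (s1 - s))).
      { unfold c0. destruct (Req_dec s 0) as [-> | Hn]; [rewrite Rminus_0_r; lra |].
        apply Rlt_le, exp_increasing, Ropp_lt_contravar, Rinv_lt_contravar; nra. }
      assert ((/ (c0 * c0) + s * s) * c0 <= (/ (c0 * c0) + s * s) * exp (- / (s1 - s)))
        by (apply Rmult_le_compat_l; nra).
      assert (E1 : (/ (c0 * c0) + s * s) * c0 = / c0 + c0 * (s * s)) by (field; lra).
      assert (E2 : / c0 + c0 * (s * s) + s = c0 * (s + / (2 * c0)) ^ 2 + 3 / (4 * c0))
        by (field; lra).
      assert (0 < 3 / (4 * c0)) by (apply Rdiv_lt_0_compat; lra).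
      assert (0 <= c0 * (s + / (2 * c0)) ^ 2) by (apply Rmult_le_pos; [lra | apply pow2_ge_0]).
      lra.
Qed.

Lemma Dn_jacobi n : Dn n Rpos jacobi.
Proof.
  apply Dn_ext with (f := fun s => (4 + (s + -1) * (2 + -1 * ln s)) * / (s + 1));
    [intro s; unfold jacobi, jacobi_num, Rdiv; ring |].
  apply Dn_mult.
  - apply Dn_plus; [apply Dn_const |]. apply Dn_mult.
    + apply Dn_plus; [apply Dn_id | apply Dn_const].
    + apply Dn_plus; [apply Dn_const | apply Dn_mult; [apply Dn_const | apply Dn_ln]].
  - apply (Dn_comp n Rpos Rpos Rinv (fun s => s + 1)); [apply Dn_inv | |].
    + apply Dn_plus; [apply Dn_id | apply Dn_const].
    + unfold Rpos. intros; lra.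
Qed.

(** The test function [u = G(x^2 + y^2)], with [G(r^2) = w(2r/m) - c] for [r >= m/2]. *)
Definition transition_const (m : R) := / (exp (- / (m * m / 8)) * exp (- / (m * m / 8))).
Definition test_profile (m c s : R) :=
  jacobi (2 * sqrt (transition (m * m / 8) (transition_const m) s) / m) - c.

Lemma Dn_test_profile m c n : 0 < m -> Dn n (fun _ => True) (test_profile m c).
Proof.
  intro Hm. unfold test_profile.
  apply Dn_ext with (f := fun s => jacobi (2 * sqrt (transition (m * m / 8) (transition_const m) s) / m)
                                   + -1 * c); [intros; ring |].
  apply Dn_plus; [| apply Dn_const].
  assert (Hp : forall s, 0 < transition (m * m / 8) (transition_const m) s)
    by (intro s; apply transition_pos; nra).
  apply (Dn_comp n Rpos (fun _ => True) jacobi); [apply Dn_jacobi | |].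
  - apply Dn_ext with (f := fun s => (2 / m) * sqrt (transition (m * m / 8) (transition_const m) s));
      [intros; unfold Rdiv; ring |].
    apply Dn_mult; [apply Dn_const |].
    apply (Dn_comp n Rpos (fun _ => True) sqrt); [apply Dn_sqrt | apply Dn_transition |].
    intros; apply Hp.
  - intros s _. unfold Rpos. apply Rdiv_lt_0_compat; [| auto].
    apply Rmult_lt_0_compat; [lra | apply sqrt_lt_R0; auto].
Qed.

Lemma test_profile_val m c r : 0 <= r -> m * m / 8 <= r * r ->
  test_profile m c (r * r) = jacobi (2 * r / m) - c.
Proof.
  intros Hr Hrm. unfold test_profile. rewrite transition_id, sqrt_square by nra. reflexivity.
Qed.

Lemma test_profile_dval m c r G' : 0 < m -> m / 2 <= r ->
  (forall x, derivable_pt_lim (test_profile m c) x (G' x)) ->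
  G' (r * r) * (2 * r) = jacobi_d (2 * r / m) * (2 / m).
Proof.
  intros Hm Hr HG.
  assert (D1 : derivable_pt_lim (fun z => test_profile m c (z * z)) r (G' (r * r) * (2 * r))).
  { apply (derivable_pt_lim_comp (fun z => z * z) (test_profile m c)); auto.
    apply is_derive_Reals. auto_derive; auto. ring. }
  assert (D2 : derivable_pt_lim (fun z => jacobi (2 * z / m) - c) r (jacobi_d (2 * r / m) * (2 / m))).
  { replace (jacobi_d (2 * r / m) * (2 / m)) with (jacobi_d (2 * r / m) * (2 / m) - 0) by ring.
    apply (derivable_pt_lim_minus (fun z => jacobi (2 * z / m)) (fun _ => c));
      [| apply derivable_pt_lim_const].
    apply (derivable_pt_lim_comp (fun z => 2 * z / m) jacobi); [apply scale_deriv; auto |].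
    apply jacobi_deriv. apply Rdiv_lt_0_compat; lra. }
  apply (derivable_pt_lim_ext_loc _ (fun z => test_profile m c (z * z)) _ _ (r / 4)) in D2.
  - eapply uniqueness_limite; eauto.
  - lra.
  - intros z Hz. apply Rabs_def2 in Hz. symmetry. apply test_profile_val; nra.
Qed.

Lemma sumsq_cont x y : continuity_2d_pt (fun x y => x * x + y * y) x y.
Proof.
  apply continuity_2d_pt_plus; apply continuity_2d_pt_mult;
    auto using continuity_2d_pt_id1, continuity_2d_pt_id2.
Qed.

Lemma C1_radial G G' : (forall x, derivable_pt_lim G x (G' x)) -> (forall x, continuity_pt G' x) ->
  C1_data (fun x y => G (x * x + y * y))
    (fun x y => G' (x * x + y * y) * (2 * x)) (fun x y => G' (x * x + y * y) * (2 * y)).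
Proof.
  intros HG HC. repeat split.
  - intros x y. apply (derivable_pt_lim_comp (fun t => t * t + y * y) G); auto.
    apply is_derive_Reals. auto_derive; auto. ring.
  - intros x y. apply (derivable_pt_lim_comp (fun t => x * x + t * t) G); auto.
    apply is_derive_Reals. auto_derive; auto. ring.
  - intros x y. apply (continuity_1d_2d_pt_comp G (fun x y => x * x + y * y)); [| apply sumsq_cont].
    apply derivable_continuous_pt. exact (exist _ _ (HG _)).
  - intros x y. apply continuity_2d_pt_mult.
    + apply (continuity_1d_2d_pt_comp G'); auto using sumsq_cont.
    + apply continuity_2d_pt_mult; auto using continuity_2d_pt_const, continuity_2d_pt_id1.
  - intros x y. apply continuity_2d_pt_mult.
    + apply (continuity_1d_2d_pt_comp G'); auto using sumsq_cont.
    + apply continuity_2d_pt_mult; auto using continuity_2d_pt_const, continuity_2d_pt_id2.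
Qed.

(** For the test function, [h r = 2 pi (F'(r) - c^2 r V(r))] with the flux
    [F r = s w'(s) (w(s) - 2c)], [s = 2r/m]: integrating the Jacobi equation by
    parts. *)
Definition radial_flux m c r := let s := 2 * r / m in s * jacobi_d s * (jacobi s - 2 * c).
Definition radial_flux_d m c r := let s := 2 * r / m in
  (2 / m) * (- 2 * jacobi s / (s + 1) ^ 2 * (jacobi s - 2 * c) + s * jacobi_d s * jacobi_d s).

Lemma radial_flux_deriv m c r : 0 < m -> 0 < r ->
  derivable_pt_lim (radial_flux m c) r (radial_flux_d m c r).
Proof.
  intros Hm Hr. set (s := 2 * r / m).
  assert (Hs : 0 < s) by (unfold s; apply Rdiv_lt_0_compat; lra).
  assert (Dn : derivable_pt_lim (fun r => (2 * r / m) * jacobi_d (2 * r / m)) r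
                 (- 2 * jacobi s / (s + 1) ^ 2 * (2 / m)))
    by (apply (derivable_pt_lim_comp (fun r => 2 * r / m) (fun s => s * jacobi_d s));
        [apply scale_deriv | apply jacobi_equation]; auto).
  assert (Dw : derivable_pt_lim (fun r => jacobi (2 * r / m) - 2 * c) r (jacobi_d s * (2 / m) - 0)).
  { apply (derivable_pt_lim_minus (fun r => jacobi (2 * r / m)) (fun _ => 2 * c));
      [| apply derivable_pt_lim_const].
    apply (derivable_pt_lim_comp (fun r => 2 * r / m) jacobi);
      [apply scale_deriv | apply jacobi_deriv]; auto. }
  pose proof (derivable_pt_lim_mult _ _ _ _ _ Dn Dw) as D.
  replace (radial_flux_d m c r) with
    (- 2 * jacobi s / (s + 1) ^ 2 * (2 / m) * (jacobi (2 * r / m) - 2 * c)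
     + 2 * r / m * jacobi_d (2 * r / m) * (jacobi_d s * (2 / m) - 0))
    by (unfold radial_flux_d; fold s; field; lra).
  exact D.
Qed.

Lemma radial_flux_d_cont m c r : 0 < m -> 0 < r -> continuity_pt (radial_flux_d m c) r.
Proof.
  intros Hm Hr. assert (0 < 2 * r / m) by (apply Rdiv_lt_0_compat; lra).
  eapply continuity_pt_of_is_derive. unfold radial_flux_d, jacobi, jacobi_num, jacobi_d.
  auto_derive; [| reflexivity].
  repeat split; try lra; auto; apply Rgt_not_eq; nra.
Qed.

Lemma radial_energy_test m c G' r : 0 < m -> m / 2 <= r ->
  (forall x, derivable_pt_lim (test_profile m c) x (G' x)) ->
  radial_energy m (fun x y => test_profile m c (x * x + y * y))
    (fun x y => G' (x * x + y * y) * (2 * x)) (fun x y => G' (x * x + y * y) * (2 * y)) r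
  = 2 * PI * (radial_flux_d m c r - c ^ 2 * (Vpot m r * r)).
Proof.
  intros Hm Hr HG. unfold radial_energy.
  rewrite (RInt_ext _ (fun _ => (jacobi_d (2 * r / m) * (2 / m)) ^ 2
                                - Vpot m r * (jacobi (2 * r / m) - c) ^ 2)).
  2:{ intros t _. pose proof (sin2_cos2 t) as H. unfold Rsqr in H.
      unfold energy_density, polar.
      replace (r * cos t * (r * cos t) + r * sin t * (r * sin t)) with (r * r)
        by (replace (r * r) with (r * r * 1) at 1 by ring; rewrite <- H; ring).
      rewrite test_profile_val, <- (test_profile_dval m c r G') by (auto; nra).
      replace ((G' (r * r) * (2 * (r * cos t))) ^ 2 + (G' (r * r) * (2 * (r * sin t))) ^ 2)
        with ((G' (r * r) * (2 * r)) ^ 2 * (sin t * sin t + cos t * cos t)) by ring.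
      rewrite H, Rmult_1_r. reflexivity. }
  rewrite RInt_const. unfold scal; simpl; unfold mult; simpl.
  unfold radial_flux_d, Vpot. set (s := 2 * r / m).
  replace r with (s * m / 2) by (unfold s; field; lra).
  assert (0 < s) by (unfold s; apply Rdiv_lt_0_compat; lra).
  field. repeat split; try lra. apply Rgt_not_eq; nra.
Qed.

Lemma radial_flux_half m c : 0 < m -> radial_flux m c (m / 2) = 0.
Proof.
  intro. unfold radial_flux. replace (2 * (m / 2) / m) with 1 by (field; lra).
  rewrite jacobi_d_1. ring.
Qed.

Lemma Qform_test m c Rad : 0 < m -> m / 2 <= Rad ->
  Qform m Rad (fun x y => test_profile m c (x * x + y * y)) =
  2 * PI * radial_flux m c Rad - 2 * PI * c ^ 2 * RInt (fun r => Vpot m r * r) (m / 2) Rad.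
Proof.
  intros Hm HR.
  destruct (Dn_test_profile m c 2 Hm) as [G' [HG HG1]].
  assert (HG' : forall x, derivable_pt_lim (test_profile m c) x (G' x)) by (intro; apply HG; auto).
  assert (CG' : forall x, continuity_pt G' x) by (intro; apply (Dn_cont 1 _ G' HG1); auto).
  rewrite (Qform_polar m Rad _ _ _ Hm HR (C1_radial _ G' HG' CG')).
  rewrite (RInt_ext _ (fun r => 2 * PI * radial_flux_d m c r + (- (2 * PI * c ^ 2)) * (Vpot m r * r)))
    by (intros x Hx; rewrite Rmin_left, Rmax_right in Hx by lra;
        rewrite radial_energy_test by (auto; lra); match goal with |- ?a = ?b => change (@eq R a b) end; ring).
  assert (Ed : ex_RInt (radial_flux_d m c) (m / 2) Rad)
    by (apply ex_RInt_cont; intros z Hz; rewrite Rmin_left in Hz by lra;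
        apply radial_flux_d_cont; lra).
  assert (Ev : ex_RInt (fun r => Vpot m r * r) (m / 2) Rad).
  { apply ex_RInt_cont. intros z Hz. rewrite Rmin_left in Hz by lra.
    apply (continuity_pt_mult (Vpot m) (fun r => r)); [apply Vpot_cont; lra |].
    apply derivable_continuous_pt, derivable_pt_id. }
  rewrite RInt_plus_R by (apply ex_RInt_scal_R; auto).
  rewrite !RInt_scal_R by auto.
  replace (RInt (radial_flux_d m c) (m / 2) Rad) with (radial_flux m c Rad - radial_flux m c (m / 2)).
  - rewrite radial_flux_half by auto. ring.
  - symmetry. apply is_RInt_unique, (is_RInt_derive (radial_flux m c) (radial_flux_d m c));
      intros x Hx; rewrite Rmin_left, Rmax_right in Hx by lra.
    + apply is_derive_Reals, radial_flux_deriv; lra.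
    + apply continuity_pt_filterlim, radial_flux_d_cont; lra.
Qed.

Lemma unstable_above_Rstar m Rad : 0 < m -> m * s_star / 2 < Rad -> ~ stable m Rad.
Proof.
  intros Hm HR Hst. pose proof s_star_gt1. pose proof PI_RGT_0.
  assert (HRm : m / 2 < Rad) by nra.
  set (sR := 2 * Rad / m).
  assert (HsR : s_star < sR).
  { unfold sR. apply (Rmult_lt_reg_r m); auto. unfold Rdiv. rewrite Rmult_assoc, Rinv_l; lra. }
  set (c := jacobi sR).
  assert (Hc : c < 0) by (apply jacobi_neg; auto).
  set (u := fun x y => test_profile m c (x * x + y * y)).
  assert (Hsm : smooth2 u) by (apply smooth_radial; intro n; apply Dn_test_profile; auto).
  assert (Hz : forall x y, x ^ 2 + y ^ 2 = Rad ^ 2 -> u x y = 0).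
  { intros x y Hxy. unfold u. replace (x * x + y * y) with (Rad * Rad) by (simpl in Hxy; lra).
    rewrite test_profile_val by nra. fold sR. unfold c. ring. }
  pose proof (Hst u Hsm Hz) as HQ. unfold u in HQ.
  rewrite Qform_test in HQ by nra.
  assert (FR : radial_flux m c Rad < 0).
  { unfold radial_flux. fold sR. fold c. pose proof (jacobi_d_neg sR ltac:(lra)).
    assert (0 < jacobi_d sR * c) by nra. nra. }
  assert (HI : 0 <= RInt (fun r => Vpot m r * r) (m / 2) Rad).
  { apply RInt_ge_0; [nra |  | ].
    - apply ex_RInt_cont. intros z Hz'. rewrite Rmin_left in Hz' by nra.
      apply (continuity_pt_mult (Vpot m) (fun r => r)); [apply Vpot_cont; lra |].
      apply derivable_continuous_pt, derivable_pt_id.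
    - intros x Hx. unfold Vpot. apply Rmult_le_pos; [| lra].
      apply Rdiv_le_0_compat; [lra | apply Rmult_lt_0_compat; [lra | apply pow_lt; lra]]. }
  assert (0 <= 2 * PI * c ^ 2 * RInt (fun r => Vpot m r * r) (m / 2) Rad)
    by (apply Rmult_le_pos; auto; apply Rmult_le_pos; [lra | apply pow2_ge_0]).
  nra.
Qed.

Theorem theorem1p2 (m : R) (hm : 0 < m) :
  exists Rs : R,
    (m / 2 < Rs /\ Rstar_eq m Rs) /\
    (forall R' : R, m / 2 < R' -> Rstar_eq m R' -> R' = Rs) /\
    (forall Rad : R, m / 2 < Rad -> (stable m Rad <-> Rad <= Rs)).
Proof.
  pose proof s_star_gt1 as Hs.
  exists (m * s_star / 2). split; [split | split].
  - nra.
  - apply Rstar_eq_psi; [auto | nra |].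
    replace (2 * (m * s_star / 2) / m) with s_star by (field; lra). apply psi_s_star.
  - intros R' HR' HE. apply Rstar_eq_psi in HE; auto.
    assert (1 < 2 * R' / m).
    { apply (Rmult_lt_reg_r m); auto. unfold Rdiv. rewrite Rmult_assoc, Rinv_l; lra. }
    replace R' with (m * (2 * R' / m) / 2) by (field; lra).
    rewrite (psi_root_unique _ H HE). reflexivity.
  - intros Rad HRad. split.
    + intro Hst. destruct (Rle_dec Rad (m * s_star / 2)) as [Hle | Hgt]; auto.
      exfalso. apply (unstable_above_Rstar m Rad hm); auto. lra.
    + intro Hle. apply stable_below_Rstar; auto.
Qed.
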